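(* Let $0<3x_0<L$, $\gamma=\gamma(x_0,L)$, $\lambda=\lambda(x_0,L)=\frac{2L}{L+x_0}$, and let $\mathcal V$ be a one-sided admissible variation of $\gamma$. Let $\varphi,\varphi_\tau,\psi,\psi_\tau\in C^\infty[0,2L]$ be defined by $X=\varphi N+\varphi_\tau\dot\gamma$ and $X'=\psi N+\psi_\tau\dot\gamma$. Then $$\left.\frac{d^2\mathcal F(\mathcal V(\cdot,t))}{dt^2}\right|_{t=0^+}=\int_0^{2L}\Big(2H\varphi^2-\frac{2\dot\varphi^2}{H}+\frac{2\ddot\varphi^2}{H^3}\Big)ds+\lambda\int_0^{2L}\big(\psi+H\varphi_\tau^2+2\varphi\dot\varphi_\tau\big)ds+\Big[\frac{\dot\psi-2\dot\varphi\dot\varphi_\tau}{H^2}\Big]_0^{2L}.$$ If moreover $\mathcal V$ is an (two-sided) admissible variation, then $\dot\varphi(0)=\dot\varphi(2L)=0$, $\dot\psi(0)\le0$, $\dot\psi(2L)\ge0$, and hence $$\left.\frac{d^2\mathcal F(\mathcal V(\cdot,t))}{dt^2}\right|_{t=0}=\int_0^{2L}\Big(2H\varphi^2-\frac{2\dot\varphi^2}{H}+\frac{2\ddot\varphi^2}{H^3}\Big)ds+\lambda\int_0^{2L}\big(\psi+H\varphi_\tau^2+2\varphi\dot\varphi_\tau\big)ds+\Big[\frac{\dot\psi}{H^2}\Big]_0^{2L}$$ $$\ge\int_0^{2L}\Big(2H\varphi^2-\frac{2\dot\varphi^2}{H}+\frac{2\ddot\varphi^2}{H^3}\Big)ds+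\lambda\int_0^{2L}\big(\psi+H\varphi_\tau^2+2\varphi\dot\varphi_\tau\big)ds.$$
   Context: Notation: $(\xi,\eta)^\perp=(\eta,-\xi)$; for a regular curve $\gamma\in C^2([0,2L],\mathbb R^2)$, curvature $H=\langle\dot\gamma,\ddot\gamma^\perp\rangle/|\dot\gamma|^3$, normal $N=\dot\gamma^\perp/|\dot\gamma|$; strictly counterclockwise means $H>0$. A curve $\gamma=(x,y)$ is admissible if $\gamma\in C^\infty([0,2L],\mathbb R^2)$ is regular, strictly counterclockwise, injective, $\gamma(0)=(x_0,0)$, $\gamma(2L)=(-x_0,0)$, $y>0$ on $(0,2L)$. $\mathcal F(\gamma)=\int_0^{2L}|\dot\gamma|H^{-1}ds$. An admissible (resp. one-sided admissible) variation is a smooth $\mathcal V:[0,2L]\times[-t_{\mathcal V},t_{\mathcal V}]\to\mathbb R^2$ (resp. $[0,2L]\times[0,t_{\mathcal V}]$) with $\mathcal V(\cdot,0)=\gamma$ and every $\mathcal V(\cdot,t)$ admissible; velocity $X=\partial_t\mathcal V|_{t=0}$, acceleration $X'=\partial_t^2\mathcal V|_{t=0}$ (one-sided derivatives in the one-sided case). For $0<3x_0<L$: with $\sigma=\pi\sqrt{x_0/(L+x_0)}$, $k=L/\sin\sigma$, $a(s)=\arcsin((s-L)/k)$, $\gamma(x_0,L)=(x,y)$ on $[0,2L]$ with $x(s)=-\frac k2\big(\frac{\sigma}{\pi+\sigma}\sin(\tfrac{\pi+\sigma}{\sigma}a(s))+\frac{\sigma}{\pi-\sigma}\sin(\tfrac{\pi-\sigma}{\sigma}a(s))\big)$,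 $y(s)=\frac k2\big(\frac{\sigma}{\pi+\sigma}\cos(\tfrac{\pi+\sigma}{\sigma}a(s))+\frac{\sigma}{\pi-\sigma}\cos(\tfrac{\pi-\sigma}{\sigma}a(s))\big)+\frac{\pi x_0}{\sigma\tan\sigma}$. It is admissible, parametrized by arc length, with curvature $H(s)=\frac{\pi}{\sigma\sqrt{k^2-(s-L)^2}}$ satisfying $2+\frac{d^2(H^{-2})}{ds^2}=\lambda(x_0,L)$. *)

From Stdlib Require Import Reals.
From Coquelicot Require Import Coquelicot.
Open Scope R_scope.

(** C^infty on [a,b]: smooth on an open neighbourhood (a-eps, b+eps).
    (Equivalent to the usual notion by Seeley/Whitney extension.) *)
Definition smooth_near (a b : R) (f : R -> R) : Prop :=
  exists eps : R, 0 < eps /\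
    forall (n : nat) (s : R), a - eps < s < b + eps -> ex_derive_n f n s.

Definition d_s (f : R -> R -> R) : R -> R -> R :=
  fun s t => Derive (fun u => f u t) s.
Definition d_t (f : R -> R -> R) : R -> R -> R :=
  fun s t => Derive (fun u => f s u) t.

Fixpoint C2k (k : nat) (U : R -> R -> Prop) (f : R -> R -> R) : Prop :=
  match k with
  | O => forall s t, U s t ->
           continuous (fun p : R * R => f (fst p) (snd p)) (s, t)
  | S k' => (forall s t, U s t ->
               ex_derive (fun u => f u t) s /\ ex_derive (fun u => f s u) t)
            /\ C2k k' U (d_s f) /\ C2k k' U (d_t f)
  end.

Definition smooth2_on (a b c d : R) (f : R -> R -> R) : Prop :=
  exists eps : R, 0 < eps /\
    forall k : nat,
      C2k k (fun s t => a - eps < s < b + eps /\ c - eps < t < d + eps) f.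

Definition speed (x y : R -> R) (s : R) : R :=
  sqrt (Derive x s ^ 2 + Derive y s ^ 2).

(** H = <gamma', (gamma'')^perp> / |gamma'|^3, with (xi,eta)^perp = (eta,-xi) *)
Definition curv (x y : R -> R) (s : R) : R :=
  (Derive x s * Derive (Derive y) s + Derive y s * (- Derive (Derive x) s))
  / speed x y s ^ 3.

Definition normal_x (x y : R -> R) (s : R) : R := Derive y s / speed x y s.
Definition normal_y (x y : R -> R) (s : R) : R := - Derive x s / speed x y s.

Definition admissible (x0 L : R) (x y : R -> R) : Prop :=
  smooth_near 0 (2 * L) x /\ smooth_near 0 (2 * L) y /\
  (forall s, 0 <= s <= 2 * L -> 0 < Derive x s ^ 2 + Derive y s ^ 2) /\
  (forall s, 0 <= s <= 2 * L -> 0 < curv x y s) /\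
  (forall s1 s2, 0 <= s1 <= 2 * L -> 0 <= s2 <= 2 * L ->
     x s1 = x s2 -> y s1 = y s2 -> s1 = s2) /\
  x 0 = x0 /\ y 0 = 0 /\ x (2 * L) = - x0 /\ y (2 * L) = 0 /\
  (forall s, 0 < s < 2 * L -> 0 < y s).

Definition energyF (L : R) (x y : R -> R) : R :=
  RInt (fun s => speed x y s / curv x y s) 0 (2 * L).

Definition sigma0 (x0 L : R) : R := PI * sqrt (x0 / (L + x0)).
Definition kk (x0 L : R) : R := L / sin (sigma0 x0 L).
Definition aa (x0 L : R) (s : R) : R := asin ((s - L) / kk x0 L).

Definition gam_x (x0 L : R) (s : R) : R :=
  let sg := sigma0 x0 L in let k := kk x0 L in let a := aa x0 L s in
  - (k / 2) * (sg / (PI + sg) * sin ((PI + sg) / sg * a)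
               + sg / (PI - sg) * sin ((PI - sg) / sg * a)).

Definition gam_y (x0 L : R) (s : R) : R :=
  let sg := sigma0 x0 L in let k := kk x0 L in let a := aa x0 L s in
  (k / 2) * (sg / (PI + sg) * cos ((PI + sg) / sg * a)
             + sg / (PI - sg) * cos ((PI - sg) / sg * a))
  + PI * x0 / (sg * tan sg).

Definition lambda0 (x0 L : R) : R := 2 * L / (L + x0).

Definition one_sided_variation (x0 L : R) (x y : R -> R)
    (Vx Vy : R -> R -> R) (tV : R) : Prop :=
  0 < tV /\
  smooth2_on 0 (2 * L) 0 tV Vx /\ smooth2_on 0 (2 * L) 0 tV Vy /\
  (forall s, 0 <= s <= 2 * L -> Vx s 0 = x s /\ Vy s 0 = y s) /\
  (forall t, 0 <= t <= tV ->
     admissible x0 L (fun s => Vx s t) (fun s => Vy s t)).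

Definition admissible_variation (x0 L : R) (x y : R -> R)
    (Vx Vy : R -> R -> R) (tV : R) : Prop :=
  0 < tV /\
  smooth2_on 0 (2 * L) (- tV) tV Vx /\ smooth2_on 0 (2 * L) (- tV) tV Vy /\
  (forall s, 0 <= s <= 2 * L -> Vx s 0 = x s /\ Vy s 0 = y s) /\
  (forall t, - tV <= t <= tV ->
     admissible x0 L (fun s => Vx s t) (fun s => Vy s t)).

Definition vel (V : R -> R -> R) (s : R) : R := Derive (fun t => V s t) 0.
Definition acc (V : R -> R -> R) (s : R) : R :=
  Derive (fun t => Derive (fun u => V s u) t) 0.

Definition is_rderiv (f : R -> R) (t l : R) : Prop :=
  filterlim (fun h => (f (t + h) - f t) / h) (at_right 0) (locally l).

Definition Fvar (L : R) (Vx Vy : R -> R -> R) (t : R) : R :=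
  energyF L (fun s => Vx s t) (fun s => Vy s t).

Definition I1 (L : R) (x y : R -> R) (phi : R -> R) : R :=
  RInt (fun s => 2 * curv x y s * phi s ^ 2
                 - 2 * Derive phi s ^ 2 / curv x y s
                 + 2 * Derive (Derive phi) s ^ 2 / curv x y s ^ 3) 0 (2 * L).

Definition I2 (L : R) (x y : R -> R) (phi phit psi : R -> R) : R :=
  RInt (fun s => psi s + curv x y s * phit s ^ 2
                 + 2 * phi s * Derive phit s) 0 (2 * L).

(* Along gamma = gamma(x0, L), parametrized by arc length with tangent angle theta
   (theta' = H, theta(0) = 0, theta(2L) = 2 pi), the curvature satisfies
   H' = alpha (s - L) H^3 with lambda = 2 - 2 alpha.  The integrand of F is
   |V_s|^4 / (V_s x V_ss); it is smooth on a tube around every time slice, so F can be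
   differentiated twice under the integral sign.  At t = 0, exchanging s- and t-derivatives
   expresses the t-derivatives of V_s and V_ss through phi, phi_tau, psi, psi_tau in the
   moving frame (T, N).  The second t-derivative of the integrand is then the integrand of
   I1 + lambda I2 plus the s-derivative of an explicit boundary term; as phi, phi_tau, psi,
   psi_tau vanish at the fixed endpoints, this term reduces to (psi' - 2 phi' phi_tau') / H^2.
   For a two-sided variation, t |-> d_s Vy (0, t) >= 0 has the minimum 0 at t = 0 (and
   d_s Vy (2L, t) a maximum), and its t-derivatives there are -phi'(0) and -psi'(0): the
   first and second derivative tests give phi'(0) = 0 and psi'(0) <= 0. *)

From Stdlib Require Import Reals Lra Lia Psatz ClassicalEpsilon.
From Coquelicot Require Import Coquelicot.
Open Scope R_scope.

(** * Smooth functions on open subsets of the plane *)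

Definition open2 (U : R -> R -> Prop) : Prop :=
  forall s t, U s t -> exists e, 0 < e /\
    forall s' t', Rabs (s' - s) < e -> Rabs (t' - t) < e -> U s' t'.

Lemma open2_rectangle a b c d : open2 (fun s t => a < s < b /\ c < t < d).
Proof.
intros s t [[H1 H2] [H3 H4]].
set (e := Rmin (Rmin (s - a) (b - s)) (Rmin (t - c) (d - t))).
assert (Hs1 : e <= s - a) by (unfold e; eauto using Rle_trans, Rmin_l, Rmin_r).
assert (Hs2 : e <= b - s) by (unfold e; eauto using Rle_trans, Rmin_l, Rmin_r).
assert (Ht1 : e <= t - c) by (unfold e; eauto using Rle_trans, Rmin_l, Rmin_r).
assert (Ht2 : e <= d - t) by (unfold e; eauto using Rle_trans, Rmin_l, Rmin_r).
exists e. split; [unfold e; repeat apply Rmin_glb_lt; lra|].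
intros s' t' Hs Ht. apply Rabs_def2 in Hs. apply Rabs_def2 in Ht. lra.
Qed.

Section OpenSet.
Variable U : R -> R -> Prop.
Hypothesis HU : open2 U.

Lemma open2_locally_2d (P : R -> R -> Prop) s t : U s t ->
  (forall s' t', U s' t' -> P s' t') -> locally_2d P s t.
Proof.
intros Hst HP. destruct (HU s t Hst) as [e [He H]].
exists (mkposreal e He). intros u v Hu Hv. apply HP, H; assumption.
Qed.

Lemma open2_locally (P : R -> R -> Prop) s t : U s t ->
  (forall s' t', U s' t' -> P s' t') ->
  locally (s, t) (fun z : R * R => P (fst z) (snd z)).
Proof. intros. apply (locally_2d_locally P s t), open2_locally_2d; assumption. Qed.

Lemma open2_locally_fst (P : R -> Prop) s t : U s t ->
  (forall s', U s' t -> P s') -> locally s P.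
Proof.
intros Hst HP. destruct (HU s t Hst) as [e [He H]].
exists (mkposreal e He). intros u Hu. apply HP, H; [exact Hu|].
rewrite Rminus_diag, Rabs_R0; exact He.
Qed.

Lemma open2_locally_snd (P : R -> Prop) s t : U s t ->
  (forall t', U s t' -> P t') -> locally t P.
Proof.
intros Hst HP. destruct (HU s t Hst) as [e [He H]].
exists (mkposreal e He). intros u Hu. apply HP, H; [|exact Hu].
rewrite Rminus_diag, Rabs_R0; exact He.
Qed.

Lemma C2k_ext k f g : (forall s t, U s t -> f s t = g s t) ->
  C2k k U f -> C2k k U g.
Proof.
revert f g. induction k as [|k IH]; intros f g Hfg Hf.
- intros s t Hst. eapply continuous_ext_loc; [|apply (Hf s t Hst)].
  apply (open2_locally (fun a b => f a b = g a b) s t Hst). auto.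
- destruct Hf as [Hd [Hs Ht]]. split; [|split].
  + intros s t Hst. destruct (Hd s t Hst) as [Ha Hb]. split.
    * eapply ex_derive_ext_loc; [|exact Ha]. apply (open2_locally_fst _ s t Hst). auto.
    * eapply ex_derive_ext_loc; [|exact Hb]. apply (open2_locally_snd _ s t Hst). auto.
  + apply (IH (d_s f)); auto. intros s t Hst. apply Derive_ext_loc.
    apply (open2_locally_fst _ s t Hst). auto.
  + apply (IH (d_t f)); auto. intros s t Hst. apply Derive_ext_loc.
    apply (open2_locally_snd _ s t Hst). auto.
Qed.

Lemma C2k_const k c : C2k k U (fun _ _ => c).
Proof.
revert c. induction k as [|k IH]; intro c.
- intros s t _. apply continuous_const.
- split; [|split].
  + intros; split; apply ex_derive_const.
  + apply (C2k_ext _ (fun _ _ => 0)); auto. intros; symmetry; apply (Derive_const c).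
  + apply (C2k_ext _ (fun _ _ => 0)); auto. intros; symmetry; apply (Derive_const c).
Qed.

Lemma C2k_plus k f g : C2k k U f -> C2k k U g -> C2k k U (fun s t => f s t + g s t).
Proof.
revert f g. induction k as [|k IH]; intros f g Hf Hg.
- intros s t Hst. apply (continuous_plus (fun p : R * R => f (fst p) (snd p))
    (fun p : R * R => g (fst p) (snd p))); auto.
- destruct Hf as [F0 [F1 F2]], Hg as [G0 [G1 G2]]. split; [|split].
  + intros s t Hst. destruct (F0 s t Hst), (G0 s t Hst).
    split; apply (ex_derive_plus (fun u => f _ _) (fun u => g _ _)); auto.
  + apply (C2k_ext _ (fun s t => d_s f s t + d_s g s t)); auto.
    intros s t Hst. destruct (F0 s t Hst), (G0 s t Hst). unfold d_s. rewrite Derive_plus; auto.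
  + apply (C2k_ext _ (fun s t => d_t f s t + d_t g s t)); auto.
    intros s t Hst. destruct (F0 s t Hst), (G0 s t Hst). unfold d_t. rewrite Derive_plus; auto.
Qed.

(* [C2k k] says nothing about lower orders, which the product rule needs. *)
Definition C2upto k f := forall j, (j <= k)%nat -> C2k j U f.

Lemma C2upto_S k f : C2upto (S k) f -> C2upto k f.
Proof. intros H j Hj. apply H; lia. Qed.
Lemma C2upto_ds k f : C2upto (S k) f -> C2upto k (d_s f).
Proof. intros H j Hj. apply (H (S j)); lia. Qed.
Lemma C2upto_dt k f : C2upto (S k) f -> C2upto k (d_t f).
Proof. intros H j Hj. apply (H (S j)); lia. Qed.
Lemma C2upto_const k c : C2upto k (fun _ _ => c).
Proof. intros j _. apply C2k_const. Qed.

Lemma C2k_mult k f g : C2upto k f -> C2upto k g -> C2k k U (fun s t => f s t * g s t).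
Proof.
revert f g. induction k as [|k IH]; intros f g Hf Hg.
- intros s t Hst. apply (continuous_mult (fun p : R * R => f (fst p) (snd p))
    (fun p : R * R => g (fst p) (snd p))); [apply (Hf 0%nat)|apply (Hg 0%nat)]; auto.
- destruct (Hf (S k) (le_n _)) as [F0 _], (Hg (S k) (le_n _)) as [G0 _].
  split; [|split].
  + intros s t Hst. destruct (F0 s t Hst), (G0 s t Hst).
    split; apply (ex_derive_mult (fun u => f _ _) (fun u => g _ _)); auto.
  + apply (C2k_ext _ (fun s t => d_s f s t * g s t + f s t * d_s g s t)).
    * intros s t Hst. destruct (F0 s t Hst), (G0 s t Hst). unfold d_s.
      rewrite Derive_mult; auto.
    * apply C2k_plus; apply IH; auto using C2upto_ds, C2upto_S.
  + apply (C2k_ext _ (fun s t => d_t f s t * g s t + f s t * d_t g s t)).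
    * intros s t Hst. destruct (F0 s t Hst), (G0 s t Hst). unfold d_t.
      rewrite Derive_mult; auto.
    * apply C2k_plus; apply IH; auto using C2upto_dt, C2upto_S.
Qed.

Lemma C2upto_mult k f g : C2upto k f -> C2upto k g -> C2upto k (fun s t => f s t * g s t).
Proof. intros Hf Hg j Hj. apply C2k_mult; intros i Hi; [apply Hf|apply Hg]; lia. Qed.

Lemma Derive_inv_sq (g : R -> R) x : ex_derive g x -> g x <> 0 ->
  Derive (fun y => / g y) x = -1 * Derive g x * (/ g x * / g x).
Proof. intros. rewrite Derive_inv; auto. field. auto. Qed.

Lemma C2upto_inv k f : (forall s t, U s t -> f s t <> 0) ->
  C2upto k f -> C2upto k (fun s t => / f s t).
Proof.
intros Hnz. revert f Hnz. induction k as [|k IH]; intros f Hnz Hf.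
- intros j Hj. replace j with 0%nat by lia. intros s t Hst.
  apply (continuous_comp (fun p : R * R => f (fst p) (snd p)) Rinv).
  + apply (Hf 0%nat); auto.
  + apply continuous_Rinv, Hnz; auto.
- intros j Hj. destruct (Nat.eq_dec j (S k)) as [->|Hne];
    [|apply (IH f Hnz (C2upto_S _ _ Hf)); lia].
  destruct (Hf (S k) (le_n _)) as [F0 _].
  assert (Hinv := IH f Hnz (C2upto_S _ _ Hf)).
  assert (Hsq : C2upto k (fun s t => / f s t * / f s t)) by (apply C2upto_mult; auto).
  split; [|split].
  + intros s t Hst. destruct (F0 s t Hst).
    split; apply (ex_derive_inv (fun u => f _ _)); auto.
  + apply (C2k_ext _ (fun s t => (-1 * d_s f s t) * (/ f s t * / f s t))).
    * intros s t Hst. destruct (F0 s t Hst). unfold d_s.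
      cbv beta. symmetry. apply (Derive_inv_sq (fun u => f _ _)); auto.
    * apply C2k_mult; auto. apply C2upto_mult; auto using C2upto_const, C2upto_ds.
  + apply (C2k_ext _ (fun s t => (-1 * d_t f s t) * (/ f s t * / f s t))).
    * intros s t Hst. destruct (F0 s t Hst). unfold d_t.
      cbv beta. symmetry. apply (Derive_inv_sq (fun u => f _ _)); auto.
    * apply C2k_mult; auto. apply C2upto_mult; auto using C2upto_const, C2upto_dt.
Qed.

Definition smooth2 f := forall k, C2k k U f.

Lemma smooth2_upto k f : smooth2 f -> C2upto k f.
Proof. intros H j _; apply H. Qed.
Lemma smooth2_ds f : smooth2 f -> smooth2 (d_s f).
Proof. intros H k. apply (H (S k)). Qed.
Lemma smooth2_dt f : smooth2 f -> smooth2 (d_t f).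
Proof. intros H k. apply (H (S k)). Qed.
Lemma smooth2_ext f g : (forall s t, U s t -> f s t = g s t) -> smooth2 f -> smooth2 g.
Proof. intros H Hf k. eapply C2k_ext; eauto. Qed.
Lemma smooth2_const c : smooth2 (fun _ _ => c).
Proof. intro k. apply C2k_const. Qed.
Lemma smooth2_plus f g : smooth2 f -> smooth2 g -> smooth2 (fun s t => f s t + g s t).
Proof. intros Hf Hg k. apply C2k_plus; auto. Qed.
Lemma smooth2_mult f g : smooth2 f -> smooth2 g -> smooth2 (fun s t => f s t * g s t).
Proof. intros Hf Hg k. apply C2k_mult; auto using smooth2_upto. Qed.
Lemma smooth2_inv f : (forall s t, U s t -> f s t <> 0) -> smooth2 f ->
  smooth2 (fun s t => / f s t).
Proof. intros Hn Hf k. apply (C2upto_inv k); auto using smooth2_upto. Qed.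

Lemma smooth2_continuity f s t : smooth2 f -> U s t -> continuity_2d_pt f s t.
Proof. intros H Hst. apply continuity_2d_pt_filterlim, (H 0%nat); auto. Qed.
Lemma smooth2_continuous_fst f s t : smooth2 f -> U s t -> continuous (fun u => f u t) s.
Proof.
intros Hf Hst. apply (continuous_comp_2 (fun u : R => u) (fun _ : R => t) f).
- apply continuous_id.
- apply continuous_const.
- apply continuity_2d_pt_filterlim, smooth2_continuity; auto.
Qed.

Lemma smooth2_ex_derive_s f s t : smooth2 f -> U s t -> ex_derive (fun u => f u t) s.
Proof. intros H Hst. destruct (H 1%nat) as [H1 _]. exact (proj1 (H1 s t Hst)). Qed.
Lemma smooth2_ex_derive_t f s t : smooth2 f -> U s t -> ex_derive (fun u => f s u) t.
Proof. intros H Hst. destruct (H 1%nat) as [H1 _]. exact (proj2 (H1 s t Hst)). Qed.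

Lemma smooth2_d_t_d_s f s t : smooth2 f -> U s t -> d_t (d_s f) s t = d_s (d_t f) s t.
Proof.
intros Hf Hst. symmetry. unfold d_s, d_t. apply Schwarz.
- apply (open2_locally_2d _ s t Hst). intros u v Huv. repeat split.
  + apply (smooth2_ex_derive_s f); auto.
  + apply (smooth2_ex_derive_t f); auto.
  + apply (smooth2_ex_derive_s (d_t f)); auto using smooth2_dt.
  + apply (smooth2_ex_derive_t (d_s f)); auto using smooth2_ds.
- apply (smooth2_continuity (d_s (d_t f))); auto using smooth2_ds, smooth2_dt.
- apply (smooth2_continuity (d_t (d_s f))); auto using smooth2_ds, smooth2_dt.
Qed.

Lemma smooth2_d_t_d_s_s f s t : smooth2 f -> U s t ->
  d_t (d_s (d_s f)) s t = d_s (d_s (d_t f)) s t.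
Proof.
intros Hf Hst. rewrite smooth2_d_t_d_s; auto using smooth2_ds.
apply Derive_ext_loc, (open2_locally_fst _ s t Hst).
intros s' Hs'. apply smooth2_d_t_d_s; auto.
Qed.

Lemma smooth2_d_t_t_d_s f s t : smooth2 f -> U s t ->
  d_t (d_t (d_s f)) s t = d_s (d_t (d_t f)) s t.
Proof.
intros Hf Hst. rewrite <- smooth2_d_t_d_s; auto using smooth2_dt.
apply Derive_ext_loc, (open2_locally_snd _ s t Hst).
intros t' Ht'. apply smooth2_d_t_d_s; auto.
Qed.

Lemma smooth2_d_t_t_d_s_s f s t : smooth2 f -> U s t ->
  d_t (d_t (d_s (d_s f))) s t = d_s (d_s (d_t (d_t f))) s t.
Proof.
intros Hf Hst. rewrite <- smooth2_d_t_d_s_s; auto using smooth2_dt.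
apply Derive_ext_loc, (open2_locally_snd _ s t Hst).
intros t' Ht'. apply smooth2_d_t_d_s_s; auto.
Qed.

End OpenSet.

Lemma smooth2_sub (U V : R -> R -> Prop) f : (forall s t, V s t -> U s t) ->
  smooth2 U f -> smooth2 V f.
Proof.
intros HUV Hf k. revert f Hf. induction k as [|k IH]; intros f Hf.
- intros s t Hst; apply (Hf 0%nat); auto.
- destruct (Hf (S k)) as [A _]. split; [|split]; auto.
  + apply IH, smooth2_ds, Hf.
  + apply IH, smooth2_dt, Hf.
Qed.

(** * One-variable calculus *)

Lemma is_derive_eps_delta (f : R -> R) a l : is_derive f a l -> forall eps, 0 < eps ->
  exists d, 0 < d /\ forall h, h <> 0 -> Rabs h < d -> Rabs ((f (a + h) - f a) / h - l) < eps.
Proof.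
intros H eps He. apply is_derive_Reals in H. destruct (H eps He) as [d Hd].
exists d. split; [apply cond_pos|exact Hd].
Qed.

Lemma is_derive_is_rderiv (f : R -> R) t l : is_derive f t l -> is_rderiv f t l.
Proof.
intro H. unfold is_rderiv. apply filterlim_locally. intro eps.
destruct (is_derive_eps_delta f t l H eps (cond_pos eps)) as [d [Hd Hq]].
exists (mkposreal d Hd). intros h Hh Hpos. apply Hq; [lra|].
change (Rabs (h - 0) < d) in Hh. rewrite Rminus_0_r in Hh. exact Hh.
Qed.

Lemma is_rderiv_ext_right (f g : R -> R) t l d : is_rderiv g t l -> 0 < d ->
  (forall h, 0 < h < d -> f (t + h) = g (t + h)) -> f t = g t -> is_rderiv f t l.
Proof.
intros Hg Hd Hfg H0. eapply filterlim_ext_loc; [|exact Hg].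
exists (mkposreal d Hd). intros h Hh Hpos.
change (Rabs (h - 0) < d) in Hh. rewrite Rminus_0_r in Hh. apply Rabs_def2 in Hh.
simpl. rewrite Hfg, H0 by lra. reflexivity.
Qed.

Lemma derive_ge0_of_right_min (f : R -> R) a l d : is_derive f a l -> 0 < d ->
  (forall t, a < t < a + d -> f a <= f t) -> 0 <= l.
Proof.
intros Hf Hd H. destruct (Rle_lt_dec 0 l) as [ok|Hl]; auto. exfalso.
destruct (is_derive_eps_delta f a l Hf (- l / 2)) as [d1 [Hd1 H1]]; [lra|].
set (h := Rmin d d1 / 2).
assert (Rmin d d1 <= d) by apply Rmin_l. assert (Rmin d d1 <= d1) by apply Rmin_r.
assert (Hh : 0 < h) by (unfold h; assert (0 < Rmin d d1) by (apply Rmin_glb_lt; auto); lra).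
assert (A := H1 h ltac:(lra) ltac:(rewrite Rabs_pos_eq; unfold h in *; lra)).
assert (B := H (a + h) ltac:(unfold h in *; lra)).
assert (0 <= (f (a + h) - f a) / h) by (apply Rdiv_le_0_compat; lra).
apply Rabs_def2 in A. lra.
Qed.

Lemma derive_le0_of_left_min (f : R -> R) a l d : is_derive f a l -> 0 < d ->
  (forall t, a - d < t < a -> f a <= f t) -> l <= 0.
Proof.
intros Hf Hd H.
assert (Hr : is_derive (fun t => f (- t)) (- a) (-1 * l)).
{ apply (is_derive_comp f (fun t => - t)); [rewrite Ropp_involutive; exact Hf|].
  auto_derive; [auto|ring]. }
enough (0 <= -1 * l) by lra.
apply (derive_ge0_of_right_min _ (- a) _ d Hr Hd). intros t Ht.
rewrite Ropp_involutive. apply H. lra.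
Qed.

Lemma derive_eq_of_right_agree (f g : R -> R) a l1 l2 d :
  is_derive f a l1 -> is_derive g a l2 -> 0 < d ->
  (forall t, a <= t < a + d -> f t = g t) -> l1 = l2.
Proof.
intros Hf Hg Hd Hfg.
assert (H1 : is_derive (fun t => f t - g t) a (l1 - l2)) by (apply (is_derive_minus f g); auto).
assert (H2 : is_derive (fun t => g t - f t) a (l2 - l1)) by (apply (is_derive_minus g f); auto).
assert (0 <= l1 - l2).
{ apply (derive_ge0_of_right_min _ a _ d H1 Hd). intros t Ht.
  rewrite !Hfg by lra. lra. }
assert (0 <= l2 - l1).
{ apply (derive_ge0_of_right_min _ a _ d H2 Hd). intros t Ht.
  rewrite !Hfg by lra. lra. }
lra.
Qed.

Lemma derive_eq_of_left_agree (f g : R -> R) a l1 l2 d :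
  is_derive f a l1 -> is_derive g a l2 -> 0 < d ->
  (forall t, a - d < t <= a -> f t = g t) -> l1 = l2.
Proof.
intros Hf Hg Hd Hfg.
assert (H1 : is_derive (fun t => f t - g t) a (l1 - l2)) by (apply (is_derive_minus f g); auto).
assert (H2 : is_derive (fun t => g t - f t) a (l2 - l1)) by (apply (is_derive_minus g f); auto).
assert (l1 - l2 <= 0).
{ apply (derive_le0_of_left_min _ a _ d H1 Hd). intros t Ht.
  rewrite !Hfg by lra. lra. }
assert (l2 - l1 <= 0).
{ apply (derive_le0_of_left_min _ a _ d H2 Hd). intros t Ht.
  rewrite !Hfg by lra. lra. }
lra.
Qed.

Lemma derive_eq0_of_local_min (f : R -> R) a l d : is_derive f a l -> 0 < d ->
  (forall t, a - d < t < a + d -> f a <= f t) -> l = 0.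
Proof.
intros Hf Hd H.
assert (0 <= l) by (apply (derive_ge0_of_right_min f a l d); auto; intros; apply H; lra).
assert (l <= 0) by (apply (derive_le0_of_left_min f a l d); auto; intros; apply H; lra).
lra.
Qed.

Lemma derive_eq0_of_local_max (f : R -> R) a l d : is_derive f a l -> 0 < d ->
  (forall t, a - d < t < a + d -> f t <= f a) -> l = 0.
Proof.
intros Hf Hd H.
enough (- l = 0) by lra.
apply (derive_eq0_of_local_min (fun t => - f t) a (- l) d); auto.
- apply (is_derive_opp f). exact Hf.
- intros t Ht. specialize (H t Ht). lra.
Qed.

(* If [h1'(0) < 0], the mean value theorem on [0, t] gives [h t < h 0]. *)
Lemma second_derive_ge0_of_local_min (h h1 : R -> R) l d : 0 < d ->
  (forall t, Rabs t < d -> is_derive h t (h1 t)) -> is_derive h1 0 l -> h1 0 = 0 ->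
  (forall t, Rabs t < d -> h 0 <= h t) -> 0 <= l.
Proof.
intros Hd Hh Hh1 H0 Hmin. destruct (Rle_lt_dec 0 l) as [ok|Hl]; auto. exfalso.
destruct (is_derive_eps_delta h1 0 l Hh1 (- l / 2)) as [d1 [Hd1 H1]]; [lra|].
set (t := Rmin d d1 / 2).
assert (Rmin d d1 <= d) by apply Rmin_l. assert (Rmin d d1 <= d1) by apply Rmin_r.
assert (Ht : 0 < t) by (unfold t; assert (0 < Rmin d d1) by (apply Rmin_glb_lt; auto); lra).
destruct (MVT_cor2 h h1 0 t Ht) as [c [Hc1 Hc2]].
{ intros c Hc. apply is_derive_Reals, Hh. rewrite Rabs_pos_eq by lra. unfold t in *; lra. }
assert (A := H1 c ltac:(lra) ltac:(rewrite Rabs_pos_eq; unfold t in *; lra)).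
rewrite Rplus_0_l, H0, Rminus_0_r in A. apply Rabs_def2 in A.
assert (Hneg : h1 c < 0).
{ assert (h1 c / c < 0) by lra.
  assert (h1 c = h1 c / c * c) by (field; lra). nra. }
assert (B := Hmin t ltac:(rewrite Rabs_pos_eq; unfold t in *; lra)).
nra.
Qed.

Lemma second_derive_le0_of_local_max (h h1 : R -> R) l d : 0 < d ->
  (forall t, Rabs t < d -> is_derive h t (h1 t)) -> is_derive h1 0 l -> h1 0 = 0 ->
  (forall t, Rabs t < d -> h t <= h 0) -> l <= 0.
Proof.
intros Hd Hh Hh1 H0 Hmax.
enough (0 <= - l) by lra.
apply (second_derive_ge0_of_local_min (fun t => - h t) (fun t => - h1 t) (- l) d Hd).
- intros t Ht. apply (is_derive_opp h). auto.
- apply (is_derive_opp h1). auto.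
- rewrite H0; ring.
- intros t Ht. specialize (Hmax t Ht). lra.
Qed.

Lemma RInt_of_is_derive (f df : R -> R) a b : a <= b ->
  (forall x, a <= x <= b -> is_derive f x (df x)) ->
  (forall x, a <= x <= b -> continuous df x) ->
  RInt df a b = f b - f a.
Proof.
intros Hab H1 H2. apply (@is_RInt_unique R_CompleteNormedModule).
apply (@is_RInt_derive R_CompleteNormedModule); intros x Hx;
  rewrite Rmin_left, Rmax_right in Hx by lra; auto.
Qed.

Lemma ex_RInt_of_continuous (f : R -> R) a b : a <= b ->
  (forall x, a <= x <= b -> continuous f x) -> ex_RInt f a b.
Proof.
intros Hab H. apply (@ex_RInt_continuous R_CompleteNormedModule).
intros z Hz. rewrite Rmin_left, Rmax_right in Hz by lra. auto.
Qed.

Lemma is_derive_RInt_smooth2 U f t0 a b d : a <= b -> 0 < d -> open2 U -> smooth2 U f ->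
  (forall s t, a <= s <= b -> Rabs (t - t0) < d -> U s t) ->
  is_derive (fun t => RInt (fun s => f s t) a b) t0 (RInt (fun s => d_t f s t0) a b).
Proof.
intros Hab Hd HU Hf HR.
assert (HR0 : forall s, a <= s <= b -> U s t0)
  by (intros; apply HR; [auto|rewrite Rminus_diag, Rabs_R0; auto]).
apply (is_derive_RInt_param (fun u v => f v u) a b t0).
- exists (mkposreal d Hd). intros y Hy s Hs. rewrite Rmin_left, Rmax_right in Hs by auto.
  apply (smooth2_ex_derive_t U f); auto.
- intros s Hs. rewrite Rmin_left, Rmax_right in Hs by auto.
  intros eps. destruct (smooth2_continuity U (d_t f) s t0 (smooth2_dt U f Hf) (HR0 s Hs) eps)
    as [r Hr].
  exists r. intros u v Hu Hv. apply Hr; auto.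
- exists (mkposreal d Hd). intros y Hy. apply ex_RInt_of_continuous; auto.
  intros s Hs. apply (smooth2_continuous_fst U); auto.
Qed.

Lemma positive_near_segment (f : R -> R -> R) a b t0 : a <= b ->
  (forall s, a <= s <= b -> continuity_2d_pt f s t0) ->
  (forall s, a <= s <= b -> 0 < f s t0) ->
  exists d, 0 < d /\ forall s t, a - d < s < b + d -> Rabs (t - t0) < d -> 0 < f s t.
Proof.
intros Hab Hc Hp.
assert (Hex : forall s, exists r : posreal, a <= s <= b ->
   forall u v, Rabs (u - s) < r -> Rabs (v - t0) < r -> 0 < f u v).
{ intro s. destruct (Rle_dec a s) as [H1|H1]; [destruct (Rle_dec s b) as [H2|H2]|].
  - destruct (Hc s (conj H1 H2) (mkposreal _ (Hp s (conj H1 H2)))) as [r Hr].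
    exists r. intros _ u v Hu Hv. specialize (Hr u v Hu Hv). simpl in Hr.
    apply Rabs_def2 in Hr. lra.
  - exists (mkposreal 1 Rlt_0_1). intros; lra.
  - exists (mkposreal 1 Rlt_0_1). intros; lra. }
set (rho := fun s => proj1_sig (constructive_indefinite_description _ (Hex s))).
assert (Hrho : forall s, a <= s <= b -> forall u v,
  Rabs (u - s) < rho s -> Rabs (v - t0) < rho s -> 0 < f u v).
{ intro s. unfold rho. destruct (constructive_indefinite_description _ (Hex s)) as [r Hr].
  exact Hr. }
assert (Hhalf : forall s, 0 < rho s / 2) by (intro s; destruct (rho s); simpl; lra).
destruct (compactness_value_1d a b (fun s => mkposreal _ (Hhalf s))) as [d Hd].
assert (Hd0 := cond_pos d).
exists d. split; [exact Hd0|]. intros x t Hx Ht.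
set (x' := Rmax a (Rmin x b)).
assert (Hx' : a <= x' <= b)
  by (unfold x'; split; [apply Rmax_l|apply Rmax_lub; [lra|apply Rmin_r]]).
assert (Hxx : Rabs (x - x') < d).
{ unfold x'. destruct (Rle_lt_dec x b).
  - rewrite Rmin_left by lra. destruct (Rle_lt_dec a x).
    + rewrite Rmax_right by lra. apply Rabs_def1; lra.
    + rewrite Rmax_left by lra. apply Rabs_def1; lra.
  - rewrite Rmin_right, Rmax_right by lra. apply Rabs_def1; lra. }
destruct (Rlt_dec 0 (f x t)) as [Hok|Hno]; auto. exfalso.
apply (Hd x' Hx'). intros [s [Hs [Hs1 Hs2]]]. simpl in Hs1, Hs2.
apply Hno, (Hrho s Hs).
- replace (x - s) with ((x - x') + (x' - s)) by ring.
  eapply Rle_lt_trans; [apply Rabs_triang|lra].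
- lra.
Qed.

Lemma derive_eq_on_segment (f g : R -> R) a b s0 l1 l2 : a < b -> a <= s0 <= b ->
  is_derive f s0 l1 -> is_derive g s0 l2 -> (forall t, a <= t <= b -> f t = g t) -> l1 = l2.
Proof.
intros Hab Hs Hf Hg Hfg. destruct (Rlt_le_dec s0 b) as [Hlt|Hge].
- apply (derive_eq_of_right_agree f g s0 l1 l2 (b - s0)); auto; [lra|].
  intros t Ht. apply Hfg. lra.
- apply (derive_eq_of_left_agree f g s0 l1 l2 (b - a)); auto; [lra|].
  intros t Ht. apply Hfg. lra.
Qed.

Section SmoothNear.
Variables (a b : R) (f : R -> R) (u : R).
Hypothesis Hf : smooth_near a b f.
Hypothesis Hu : a <= u <= b.

Lemma smooth_near_ex_derive_n n : ex_derive_n f n u.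
Proof. destruct Hf as [eps [Heps H]]. apply H. lra. Qed.

Lemma smooth_near_is_derive : is_derive f u (Derive f u).
Proof. apply Derive_correct, (smooth_near_ex_derive_n 1). Qed.

Lemma smooth_near_is_derive2 : is_derive (Derive f) u (Derive (Derive f) u).
Proof. apply Derive_correct, (smooth_near_ex_derive_n 2). Qed.

Lemma smooth_near_continuous :
  continuous f u /\ continuous (Derive f) u /\ continuous (Derive (Derive f)) u.
Proof.
split; [|split]; apply (@ex_derive_continuous R_AbsRing R_NormedModule).
- apply (smooth_near_ex_derive_n 1).
- apply (smooth_near_ex_derive_n 2).
- apply (smooth_near_ex_derive_n 3).
Qed.
End SmoothNear.

Ltac continuity_step := match goal with
| |- continuous (fun u => _ + _) _ => apply (continuous_plus (V := R_NormedModule))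
| |- continuous (fun u => _ - _) _ => apply (continuous_minus (V := R_NormedModule))
| |- continuous (fun u => _ * _) _ => apply (continuous_mult (K := R_AbsRing))
| |- continuous (fun u => - _) _ => apply (continuous_opp (V := R_NormedModule))
| |- continuous (fun u => / _) _ => apply (continuous_comp _ Rinv); [|apply continuous_Rinv]
| |- continuous (fun u => _ / _) _ => apply (continuous_mult (K := R_AbsRing))
| |- continuous (fun u => _ ^ ?n) _ =>
    apply (continuous_comp _ (fun y => y ^ n));
    [|apply (ex_derive_continuous (V := R_NormedModule)); auto_derive; auto]
| |- continuous (fun u => ?c) _ => apply continuous_const
end.

(** * The curve gamma(x0, L) *)

Section Gamma.
Variables x0 L : R.
Hypothesis Hx0 : 0 < x0.
Hypothesis HL : 3 * x0 < L.

Let sg := sigma0 x0 L.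
Let k := kk x0 L.

Lemma sigma0_bounds : 0 < sg < PI / 2.
Proof.
unfold sg, sigma0. set (r := x0 / (L + x0)).
assert (Hr : 0 < r < 1 / 4).
{ unfold r. split; [apply Rdiv_lt_0_compat; lra|].
  apply Rmult_lt_reg_r with (4 * (L + x0)); [lra|]. field_simplify; lra. }
assert (Hs := sqrt_lt_R0 r (proj1 Hr)).
assert (Hss := sqrt_sqrt r (Rlt_le _ _ (proj1 Hr))).
assert (Hq : sqrt r < 1 / 2) by nra.
assert (Hpi := PI_RGT_0). split; nra.
Qed.

Lemma sin_sigma0_bounds : 0 < sin sg < 1.
Proof.
destruct sigma0_bounds. split; [apply sin_gt_0; lra|].
rewrite <- sin_PI2. apply sin_increasing_1; lra.
Qed.

Lemma kk_gt_L : L < k.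
Proof.
unfold k, kk. fold sg. destruct sin_sigma0_bounds.
assert (E : L / sin sg * sin sg = L) by (field; lra).
assert (0 < L / sin sg) by (apply Rdiv_lt_0_compat; lra). nra.
Qed.

Definition gamma_domain s := L - k < s < L + k.

Lemma gamma_domain_segment s : 0 <= s <= 2 * L -> gamma_domain s.
Proof. intro. assert (Hk := kk_gt_L). unfold gamma_domain; lra. Qed.

Lemma gamma_domain_locally s (P : R -> Prop) : gamma_domain s ->
  (forall u, gamma_domain u -> P u) -> locally s P.
Proof.
unfold gamma_domain. intros Hs HP.
set (e := Rmin (s - (L - k)) (L + k - s)).
assert (He : 0 < e) by (apply Rmin_glb_lt; lra).
assert (e <= s - (L - k)) by apply Rmin_l. assert (e <= L + k - s) by apply Rmin_r.
exists (mkposreal e He). intros u Hu. apply HP.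
change (Rabs (u - s) < e) in Hu. apply Rabs_def2 in Hu. lra.
Qed.

Lemma gamma_domain_arg s : gamma_domain s -> -1 < (s - L) / k < 1.
Proof.
unfold gamma_domain. intro H. assert (Hk := kk_gt_L).
assert (E : (s - L) / k * k = s - L) by (field; lra). split; nra.
Qed.

Definition tangent_angle s := PI / sg * asin ((s - L) / k) + PI.
Definition curvature s := PI / (sg * sqrt (k ^ 2 - (s - L) ^ 2)).
Definition curvature_rate := sg ^ 2 / PI ^ 2.

Lemma gamma_domain_radicand s : gamma_domain s -> 0 < k ^ 2 - (s - L) ^ 2.
Proof. unfold gamma_domain; intros; assert (Hk := kk_gt_L); nra. Qed.

Lemma curvature_pos s : gamma_domain s -> 0 < curvature s.
Proof.
intro H. unfold curvature. destruct sigma0_bounds. assert (Hpi := PI_RGT_0).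
apply Rdiv_lt_0_compat; auto.
apply Rmult_lt_0_compat; auto. apply sqrt_lt_R0, gamma_domain_radicand; auto.
Qed.

(* [H' = alpha (s - L) H^3], equivalently [(H^-2)'' = -2 alpha], i.e. [lambda = 2 - 2 alpha]. *)
Lemma is_derive_curvature s : gamma_domain s ->
  is_derive curvature s (curvature_rate * (s - L) * curvature s ^ 3).
Proof.
intro H. assert (HP := gamma_domain_radicand s H).
destruct sigma0_bounds. assert (Hpi := PI_RGT_0).
assert (Hr := sqrt_sqrt _ (Rlt_le _ _ HP)). assert (Hr0 := sqrt_lt_R0 _ HP).
unfold curvature. auto_derive.
- repeat split; auto. apply Rgt_not_eq, Rmult_lt_0_compat; auto.
- unfold curvature_rate.
  replace (k * (k * 1) + - ((s + - L) * ((s + - L) * 1))) with (k ^ 2 - (s - L) ^ 2) by ring.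
  field. repeat split; lra.
Qed.

Lemma is_derive_aa s : gamma_domain s ->
  is_derive (aa x0 L) s (/ k * (1 / sqrt (1 - ((s - L) / k)²))).
Proof.
intro H. unfold aa. fold k. assert (Hk := kk_gt_L). destruct (gamma_domain_arg s H) as [z1 z2].
apply (is_derive_comp asin (fun t => (t - L) / k)).
- apply is_derive_Reals, (derive_pt_eq_1 _ _ _ (derivable_pt_asin _ (conj z1 z2))).
  apply derive_pt_asin.
- auto_derive; [auto|field; lra].
Qed.

Lemma is_derive_tangent_angle s : gamma_domain s -> is_derive tangent_angle s (curvature s).
Proof.
intro H. assert (Hk := kk_gt_L). destruct (gamma_domain_arg s H) as [z1 z2].
assert (Hq : 0 < 1 - ((s - L) / k)²) by (unfold Rsqr; nra).
assert (Hsq := sqrt_lt_R0 _ Hq). destruct sigma0_bounds.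
assert (E : curvature s = PI / sg * (/ k * (1 / sqrt (1 - ((s - L) / k)²))) + 0).
{ unfold curvature.
  replace (k ^ 2 - (s - L) ^ 2) with (k² * (1 - ((s - L) / k)²)) by (unfold Rsqr; field; lra).
  rewrite sqrt_mult, sqrt_Rsqr by (try apply Rle_0_sqr; lra). field. repeat split; lra. }
rewrite E. apply (is_derive_plus (fun t => PI / sg * asin ((t - L) / k)) (fun _ => PI)).
- apply is_derive_scal, is_derive_aa; auto.
- exact (is_derive_const PI s).
Qed.

(* With [A = aa s], the defining sines/cosines have arguments [PI/sg A +- A],
   and [cos A = sqrt (1 - ((s-L)/k)^2)] cancels against [A']. *)
Lemma is_derive_gam_x s : gamma_domain s -> is_derive (gam_x x0 L) s (cos (tangent_angle s)).
Proof.
intro H. assert (Hk := kk_gt_L). destruct (gamma_domain_arg s H) as [z1 z2].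
assert (Hq : 0 < 1 - ((s - L) / k)²) by (unfold Rsqr; nra).
assert (Hsq := sqrt_lt_R0 _ Hq). destruct sigma0_bounds.
assert (Ha := is_derive_aa s H).
unfold gam_x. cbv zeta. fold sg k.
auto_derive.
- repeat split; exists (/ k * (1 / sqrt (1 - ((s - L) / k)²))); exact Ha.
- replace (Derive (fun x : R => aa x0 L x) s) with (/ k * (1 / sqrt (1 - ((s - L) / k)²)))
    by (symmetry; apply is_derive_unique; exact Ha).
  unfold tangent_angle. change (asin ((s - L) / k)) with (aa x0 L s). set (A := aa x0 L s).
  replace ((PI + sg) / sg * A) with (PI / sg * A + A) by (field; lra).
  replace ((PI - sg) / sg * A) with (PI / sg * A - A) by (field; lra).
  rewrite cos_plus, cos_minus, cos_plus, cos_PI, sin_PI.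
  replace (cos A) with (sqrt (1 - ((s - L) / k)²)) by (symmetry; apply cos_asin; lra).
  change (aa x0 L s) with A.
  assert (Hpi := PI_RGT_0). field. repeat split; lra.
Qed.

Lemma is_derive_gam_y s : gamma_domain s -> is_derive (gam_y x0 L) s (sin (tangent_angle s)).
Proof.
intro H. assert (Hk := kk_gt_L). destruct (gamma_domain_arg s H) as [z1 z2].
assert (Hq : 0 < 1 - ((s - L) / k)²) by (unfold Rsqr; nra).
assert (Hsq := sqrt_lt_R0 _ Hq). destruct sigma0_bounds.
assert (Ha := is_derive_aa s H).
unfold gam_y. cbv zeta. fold sg k.
auto_derive.
- repeat split; exists (/ k * (1 / sqrt (1 - ((s - L) / k)²))); exact Ha.
- replace (Derive (fun x : R => aa x0 L x) s) with (/ k * (1 / sqrt (1 - ((s - L) / k)²)))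
    by (symmetry; apply is_derive_unique; exact Ha).
  unfold tangent_angle. change (asin ((s - L) / k)) with (aa x0 L s). set (A := aa x0 L s).
  replace ((PI + sg) / sg * A) with (PI / sg * A + A) by (field; lra).
  replace ((PI - sg) / sg * A) with (PI / sg * A - A) by (field; lra).
  rewrite sin_plus, sin_minus, sin_plus, cos_PI, sin_PI.
  replace (cos A) with (sqrt (1 - ((s - L) / k)²)) by (symmetry; apply cos_asin; lra).
  change (aa x0 L s) with A.
  assert (Hpi := PI_RGT_0). field. repeat split; lra.
Qed.

Lemma Derive_gam_x s : gamma_domain s -> Derive (gam_x x0 L) s = cos (tangent_angle s).
Proof. intro; apply is_derive_unique, is_derive_gam_x; auto. Qed.
Lemma Derive_gam_y s : gamma_domain s -> Derive (gam_y x0 L) s = sin (tangent_angle s).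
Proof. intro; apply is_derive_unique, is_derive_gam_y; auto. Qed.

Lemma Derive2_gam_x s : gamma_domain s ->
  Derive (Derive (gam_x x0 L)) s = - sin (tangent_angle s) * curvature s.
Proof.
intro H. rewrite (Derive_ext_loc _ (fun u => cos (tangent_angle u))).
- apply is_derive_unique. rewrite Rmult_comm.
  apply (is_derive_comp cos tangent_angle); [|apply is_derive_tangent_angle; auto].
  apply is_derive_Reals, derivable_pt_lim_cos.
- apply gamma_domain_locally; auto. intros; apply Derive_gam_x; auto.
Qed.

Lemma Derive2_gam_y s : gamma_domain s ->
  Derive (Derive (gam_y x0 L)) s = cos (tangent_angle s) * curvature s.
Proof.
intro H. rewrite (Derive_ext_loc _ (fun u => sin (tangent_angle u))).
- apply is_derive_unique. rewrite Rmult_comm.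
  apply (is_derive_comp sin tangent_angle); [|apply is_derive_tangent_angle; auto].
  apply is_derive_Reals, derivable_pt_lim_sin.
- apply gamma_domain_locally; auto. intros; apply Derive_gam_y; auto.
Qed.

Lemma speed_gamma s : gamma_domain s -> speed (gam_x x0 L) (gam_y x0 L) s = 1.
Proof.
intro H. unfold speed. rewrite Derive_gam_x, Derive_gam_y by auto.
replace (cos (tangent_angle s) ^ 2 + sin (tangent_angle s) ^ 2) with 1; [apply sqrt_1|].
rewrite <- (sin2_cos2 (tangent_angle s)). unfold Rsqr. ring.
Qed.

Lemma curv_gamma s : gamma_domain s -> curv (gam_x x0 L) (gam_y x0 L) s = curvature s.
Proof.
intro H. unfold curv.
rewrite speed_gamma, Derive_gam_x, Derive_gam_y, Derive2_gam_x, Derive2_gam_y by auto.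
assert (E := sin2_cos2 (tangent_angle s)). unfold Rsqr in E.
transitivity (curvature s * (sin (tangent_angle s) * sin (tangent_angle s)
  + cos (tangent_angle s) * cos (tangent_angle s))); [field|rewrite E; ring].
Qed.

Lemma normal_x_gamma s : gamma_domain s ->
  normal_x (gam_x x0 L) (gam_y x0 L) s = sin (tangent_angle s).
Proof. intro H. unfold normal_x. rewrite speed_gamma, Derive_gam_y by auto. field. Qed.
Lemma normal_y_gamma s : gamma_domain s ->
  normal_y (gam_x x0 L) (gam_y x0 L) s = - cos (tangent_angle s).
Proof. intro H. unfold normal_y. rewrite speed_gamma, Derive_gam_x by auto. field. Qed.

Lemma tangent_angle_0 : tangent_angle 0 = 0.
Proof.
unfold tangent_angle. destruct sin_sigma0_bounds, sigma0_bounds. assert (Hpi := PI_RGT_0).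
replace ((0 - L) / k) with (sin (- sg)).
- rewrite asin_sin by lra. field. lra.
- rewrite sin_neg. unfold k, kk. fold sg. field. lra.
Qed.

Lemma tangent_angle_2L : tangent_angle (2 * L) = 2 * PI.
Proof.
unfold tangent_angle. destruct sin_sigma0_bounds, sigma0_bounds. assert (Hpi := PI_RGT_0).
replace ((2 * L - L) / k) with (sin sg).
- rewrite asin_sin by lra. field. lra.
- unfold k, kk. fold sg. field. lra.
Qed.

Lemma lambda0_curvature_rate : lambda0 x0 L = 2 - 2 * curvature_rate.
Proof.
unfold lambda0, curvature_rate, sg, sigma0. assert (Hpi := PI_RGT_0).
assert (Hr : 0 <= x0 / (L + x0)) by (apply Rlt_le, Rdiv_lt_0_compat; lra).
rewrite Rpow_mult_distr, pow2_sqrt by auto. field. lra.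
Qed.

End Gamma.

(** * The integrand in a moving frame *)

(* [auto_derive] leaves [Derive f x] for the opaque functions; replace it by the known value. *)
Ltac rewrite_Derive H := match type of H with is_derive ?f ?x ?l =>
  replace (Derive (fun y : R => f y) x) with l by (symmetry; apply is_derive_unique; exact H) end.

Definition dot2 (ax ay bx by' : R) : R := ax * bx + ay * by'.
Definition cross2 (ax ay bx by' : R) : R := ax * by' - ay * bx.

(* Cartesian coordinates of [A N + B T] for the frame [T = (cos th, sin th)], [N = T^perp]. *)
Definition frame_x (A B th : R) : R := A * sin th + B * cos th.
Definition frame_y (A B th : R) : R := - A * cos th + B * sin th.

Lemma dot2_frame A1 B1 A2 B2 th :
  dot2 (frame_x A1 B1 th) (frame_y A1 B1 th) (frame_x A2 B2 th) (frame_y A2 B2 th)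
  = A1 * A2 + B1 * B2.
Proof.
unfold dot2, frame_x, frame_y. assert (E := sin2_cos2 th). unfold Rsqr in E.
transitivity ((A1 * A2 + B1 * B2) * (sin th * sin th + cos th * cos th)); [ring|rewrite E; ring].
Qed.

Lemma cross2_frame A1 B1 A2 B2 th :
  cross2 (frame_x A1 B1 th) (frame_y A1 B1 th) (frame_x A2 B2 th) (frame_y A2 B2 th)
  = A1 * B2 - B1 * A2.
Proof.
unfold cross2, frame_x, frame_y. assert (E := sin2_cos2 th). unfold Rsqr in E.
transitivity ((A1 * B2 - B1 * A2) * (sin th * sin th + cos th * cos th)); [ring|rewrite E; ring].
Qed.

(* [T' = th' (-N)] and [N' = th' T]. *)
Lemma is_derive_frame_x (A B th : R -> R) s A1 B1 h :
  is_derive A s A1 -> is_derive B s B1 -> is_derive th s h ->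
  is_derive (fun u => frame_x (A u) (B u) (th u)) s (frame_x (A1 - h * B s) (h * A s + B1) (th s)).
Proof.
intros HA HB Ht. unfold frame_x. auto_derive.
- repeat split; eexists; eassumption.
- rewrite_Derive HA. rewrite_Derive HB. rewrite_Derive Ht. ring.
Qed.

Lemma is_derive_frame_y (A B th : R -> R) s A1 B1 h :
  is_derive A s A1 -> is_derive B s B1 -> is_derive th s h ->
  is_derive (fun u => frame_y (A u) (B u) (th u)) s (frame_y (A1 - h * B s) (h * A s + B1) (th s)).
Proof.
intros HA HB Ht. unfold frame_y. auto_derive.
- repeat split; eexists; eassumption.
- rewrite_Derive HA. rewrite_Derive HB. rewrite_Derive Ht. ring.
Qed.

(* Second derivative of [u^2 / c] in terms of [u, u', u'', c, c', c'']. *)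
Definition sq_div_d2 (u u1 u2 c c1 c2 : R) : R :=
  2 * u1 ^ 2 / c + 2 * u * u2 / c - 4 * u * u1 * c1 / c ^ 2 - u ^ 2 * c2 / c ^ 2
  + 2 * u ^ 2 * c1 ^ 2 / c ^ 3.

Lemma is_derive2_sq_div (u u1 c c1 : R -> R) t0 u2 c2 :
  locally t0 (fun t => is_derive u t (u1 t) /\ is_derive c t (c1 t) /\ c t <> 0) ->
  is_derive u1 t0 u2 -> is_derive c1 t0 c2 ->
  is_derive (fun t => Derive (fun t => u t ^ 2 / c t) t) t0
    (sq_div_d2 (u t0) (u1 t0) u2 (c t0) (c1 t0) c2).
Proof.
intros Hl Hu1 Hc1. destruct (locally_singleton _ _ Hl) as [Hu [Hc Hc0]].
eapply is_derive_ext_loc.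
{ eapply filter_imp; [|exact Hl]. intros t [Hut [Hct Hc0t]].
  symmetry. apply is_derive_unique.
  apply (is_derive_div (fun t => u t ^ 2) c t); [|exact Hct|exact Hc0t].
  apply (is_derive_pow u 2 t), Hut. }
auto_derive.
- repeat split; try (eexists; eassumption); auto.
- rewrite_Derive Hu. rewrite_Derive Hc. rewrite_Derive Hu1. rewrite_Derive Hc1.
  unfold sq_div_d2. simpl. field. auto.
Qed.

(* The integrand [|gamma_s| / H = |gamma_s|^4 / (gamma_s x gamma_ss)] along a family
   of vectors [a = gamma_s], [b = gamma_ss]. *)
Definition sq_dot_div_cross (ax ay bx by' : R) : R :=
  dot2 ax ay ax ay ^ 2 / cross2 ax ay bx by'.

Lemma is_derive2_sq_dot_div_cross (ax ay bx by' ax1 ay1 bx1 by1 : R -> R) t0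
    ax2 ay2 bx2 by2 :
  locally t0 (fun t => is_derive ax t (ax1 t) /\ is_derive ay t (ay1 t) /\
    is_derive bx t (bx1 t) /\ is_derive by' t (by1 t) /\
    cross2 (ax t) (ay t) (bx t) (by' t) <> 0) ->
  is_derive ax1 t0 ax2 -> is_derive ay1 t0 ay2 ->
  is_derive bx1 t0 bx2 -> is_derive by1 t0 by2 ->
  is_derive (fun t => Derive (fun t => sq_dot_div_cross (ax t) (ay t) (bx t) (by' t)) t) t0
    (sq_div_d2 (dot2 (ax t0) (ay t0) (ax t0) (ay t0))
       (2 * dot2 (ax t0) (ay t0) (ax1 t0) (ay1 t0))
       (2 * (dot2 (ax1 t0) (ay1 t0) (ax1 t0) (ay1 t0) + dot2 (ax t0) (ay t0) ax2 ay2))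
       (cross2 (ax t0) (ay t0) (bx t0) (by' t0))
       (cross2 (ax1 t0) (ay1 t0) (bx t0) (by' t0) + cross2 (ax t0) (ay t0) (bx1 t0) (by1 t0))
       (cross2 ax2 ay2 (bx t0) (by' t0) + 2 * cross2 (ax1 t0) (ay1 t0) (bx1 t0) (by1 t0)
        + cross2 (ax t0) (ay t0) bx2 by2)).
Proof.
intros Hl H1 H2 H3 H4. destruct (locally_singleton _ _ Hl) as [Hax [Hay [Hbx [Hby _]]]].
set (u := fun t => dot2 (ax t) (ay t) (ax t) (ay t)).
set (c := fun t => cross2 (ax t) (ay t) (bx t) (by' t)).
set (u1 := fun t => 2 * dot2 (ax t) (ay t) (ax1 t) (ay1 t)).
set (c1 := fun t => cross2 (ax1 t) (ay1 t) (bx t) (by' t) + cross2 (ax t) (ay t) (bx1 t) (by1 t)).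
apply (is_derive2_sq_div u u1 c c1 t0).
- eapply filter_imp; [|exact Hl]. intros t [Ha [Hb [Hc [Hd He]]]].
  split; [|split; [|exact He]]; unfold u, u1, c, c1, dot2, cross2; auto_derive;
    try (repeat split; eexists; eassumption);
    rewrite_Derive Ha; rewrite_Derive Hb; try (rewrite_Derive Hc; rewrite_Derive Hd); ring.
- unfold u1, dot2. auto_derive.
  + repeat split; eexists; eassumption.
  + rewrite_Derive Hax. rewrite_Derive Hay. rewrite_Derive H1. rewrite_Derive H2. ring.
- unfold c1, cross2. auto_derive.
  + repeat split; eexists; eassumption.
  + rewrite_Derive Hax. rewrite_Derive Hay. rewrite_Derive Hbx. rewrite_Derive Hby.
    rewrite_Derive H1. rewrite_Derive H2. rewrite_Derive H3. rewrite_Derive H4. ring.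
Qed.

(* Densities along the curve; [f, p, ps, q] stand for [phi, phi_tau, psi, psi_tau],
   suffixes [1, 2] for their [s]-derivatives, [h] for [H] and [al] for the constant with
   [H' = al (s - L0) H^3]. *)
Definition reduced_density (al h f f1 f2 p p1 ps : R) : R :=
  2 * h * f ^ 2 - 2 * f1 ^ 2 / h + 2 * f2 ^ 2 / h ^ 3 + (2 - 2 * al) * (ps + h * p ^ 2 + 2 * f * p1).

(* [sq_div_d2] evaluated in the moving frame, where [gamma_s = T], [gamma_ss = -h N],
   [(a1, b1)], [(a2, b2)], [(c1, d1)], [(c2, _)] are the frame coordinates of
   [X_s], [X_ss], [X'_s], [X'_ss]. *)
Definition second_variation_density (al L0 s h f f1 f2 p p1 p2 ps ps1 ps2 q q1 : R) : R :=
  let h1 := al * (s - L0) * h ^ 3 in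
  let a1 := f1 - h * p in let b1 := h * f + p1 in
  let a2 := (f2 - (h1 * p + h * p1)) - h * b1 in
  let b2 := h * a1 + (h1 * f + h * f1 + p2) in
  let c1 := ps1 - h * q in let d1 := h * ps + q1 in
  let c2 := (ps2 - (h1 * q + h * q1)) - h * d1 in
  sq_div_d2 1 (2 * b1) (2 * (a1 ^ 2 + b1 ^ 2 + d1)) h (h * b1 - a2)
    (h * d1 + 2 * (a1 * b2 - b1 * a2) - c2).

Definition boundary_term (al L0 : R) (f f1 p p1 ps ps1 q h : R -> R) (u : R) : R :=
  ps1 u / h u ^ 2 + q u / h u + 2 * al * (u - L0) * ps u + 2 * f u * f1 u / h u
  + 2 * p u * p1 u / h u + 2 * al * (u - L0) * h u * p u ^ 2 - 2 * f u * p u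
  - 2 * f1 u * p1 u / h u ^ 2 - 4 * al * (u - L0) * p u * f1 u + 4 * al * f u * p u.

(* The integration by parts of the second variation, performed pointwise. *)
Lemma is_derive_boundary_term al L0 (f f1 p p1 ps ps1 q h : R -> R) s f2 p2 ps2 q1 :
  is_derive f s (f1 s) -> is_derive f1 s f2 -> is_derive p s (p1 s) -> is_derive p1 s p2 ->
  is_derive ps s (ps1 s) -> is_derive ps1 s ps2 -> is_derive q s q1 ->
  is_derive h s (al * (s - L0) * h s ^ 3) -> h s <> 0 ->
  is_derive (boundary_term al L0 f f1 p p1 ps ps1 q h) s
    (second_variation_density al L0 s (h s) (f s) (f1 s) f2 (p s) (p1 s) p2
       (ps s) (ps1 s) ps2 (q s) q1
     - reduced_density al (h s) (f s) (f1 s) f2 (p s) (p1 s) (ps s)).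
Proof.
intros Hf Hf1 Hp Hp1 Hps Hps1 Hq Hh Hh0. unfold boundary_term.
auto_derive.
- repeat split; try (eexists; eassumption); auto.
- rewrite_Derive Hf. rewrite_Derive Hf1. rewrite_Derive Hp. rewrite_Derive Hp1.
  rewrite_Derive Hps. rewrite_Derive Hps1. rewrite_Derive Hq. rewrite_Derive Hh.
  unfold second_variation_density, reduced_density, sq_div_d2. cbv zeta. field. auto.
Qed.

Lemma frame_derive_on_segment a b (th h A B A1 B1 vx vy vx1 vy1 : R -> R) : a < b ->
  (forall u, a <= u <= b ->
     is_derive th u (h u) /\ is_derive A u (A1 u) /\ is_derive B u (B1 u)) ->
  (forall u, a <= u <= b -> is_derive vx u (vx1 u) /\ is_derive vy u (vy1 u)) ->
  (forall u, a <= u <= b ->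
     vx u = frame_x (A u) (B u) (th u) /\ vy u = frame_y (A u) (B u) (th u)) ->
  forall u, a <= u <= b ->
    vx1 u = frame_x (A1 u - h u * B u) (h u * A u + B1 u) (th u) /\
    vy1 u = frame_y (A1 u - h u * B u) (h u * A u + B1 u) (th u).
Proof.
intros Hab Hd Hv Hframe u Hu. destruct (Hd u Hu) as [Ht [HA HB]]. destruct (Hv u Hu) as [Hx Hy].
split.
- apply (derive_eq_on_segment vx (fun w => frame_x (A w) (B w) (th w)) a b u); auto.
  + apply is_derive_frame_x; auto.
  + intros; apply Hframe; auto.
- apply (derive_eq_on_segment vy (fun w => frame_y (A w) (B w) (th w)) a b u); auto.
  + apply is_derive_frame_y; auto.
  + intros; apply Hframe; auto.
Qed.

(** * Second variation along an admissible variation *)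

Section Variation.
Variables x0 L : R.
Hypothesis Hx0 : 0 < x0.
Hypothesis HL : 3 * x0 < L.
Variables (Vx Vy : R -> R -> R) (c0 d0 e : R).
Hypothesis Hc0 : c0 <= 0.
Hypothesis Hd0 : 0 < d0.
Hypothesis He : 0 < e.
Let U0 := fun s t => 0 - e < s < 2 * L + e /\ c0 - e < t < d0 + e.
Hypothesis HVx : smooth2 U0 Vx.
Hypothesis HVy : smooth2 U0 Vy.
Hypothesis Hinit : forall s, 0 <= s <= 2 * L -> Vx s 0 = gam_x x0 L s /\ Vy s 0 = gam_y x0 L s.
Hypothesis Hadm : forall t, c0 <= t <= d0 -> admissible x0 L (fun s => Vx s t) (fun s => Vy s t).

Lemma U0_open : open2 U0.
Proof. apply open2_rectangle. Qed.

Lemma U0_segment s t : 0 <= s <= 2 * L -> c0 <= t <= d0 -> U0 s t.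
Proof. unfold U0; lra. Qed.

Definition speed2 s t := dot2 (d_s Vx s t) (d_s Vy s t) (d_s Vx s t) (d_s Vy s t).
Definition turning s t := cross2 (d_s Vx s t) (d_s Vy s t) (d_s (d_s Vx) s t) (d_s (d_s Vy) s t).
Definition integrand s t :=
  sq_dot_div_cross (d_s Vx s t) (d_s Vy s t) (d_s (d_s Vx) s t) (d_s (d_s Vy) s t).

Lemma smooth2_speed2_turning U : open2 U -> (forall s t, U s t -> U0 s t) ->
  smooth2 U speed2 /\ smooth2 U turning.
Proof.
intros HU Hsub.
assert (SX1 : smooth2 U (d_s Vx)) by (apply (smooth2_sub U0); auto; apply smooth2_ds; auto).
assert (SY1 : smooth2 U (d_s Vy)) by (apply (smooth2_sub U0); auto; apply smooth2_ds; auto).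
assert (SX2 : smooth2 U (d_s (d_s Vx))) by (apply smooth2_ds; auto).
assert (SY2 : smooth2 U (d_s (d_s Vy))) by (apply smooth2_ds; auto).
split.
- apply smooth2_plus; auto; apply smooth2_mult; auto.
- apply (smooth2_ext U HU (fun s t => d_s Vx s t * d_s (d_s Vy) s t
    + (-1) * (d_s Vy s t * d_s (d_s Vx) s t))); auto.
  + intros; unfold turning, cross2; ring.
  + repeat first [apply smooth2_plus | apply smooth2_mult | apply smooth2_const]; auto.
Qed.

Lemma speed_slice s t : speed (fun u => Vx u t) (fun u => Vy u t) s = sqrt (speed2 s t).
Proof. unfold speed, speed2, dot2, d_s. f_equal. ring. Qed.

Lemma curv_slice s t :
  curv (fun u => Vx u t) (fun u => Vy u t) s = turning s t / sqrt (speed2 s t) ^ 3.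
Proof.
unfold curv. rewrite speed_slice. f_equal.
change (Derive (fun u => Vx u t) s) with (d_s Vx s t).
change (Derive (fun u => Vy u t) s) with (d_s Vy s t).
change (Derive (Derive (fun u => Vx u t)) s) with (d_s (d_s Vx) s t).
change (Derive (Derive (fun u => Vy u t)) s) with (d_s (d_s Vy) s t).
unfold turning, cross2. ring.
Qed.

Lemma speed2_turning_pos s t : 0 <= s <= 2 * L -> c0 <= t <= d0 ->
  0 < speed2 s t /\ 0 < turning s t.
Proof.
intros Hs Ht. destruct (Hadm t Ht) as [_ [_ [Hu [Hcv _]]]].
specialize (Hu s Hs). specialize (Hcv s Hs). rewrite curv_slice in Hcv.
assert (Hu' : 0 < speed2 s t) by (unfold speed2, dot2, d_s; simpl in Hu; lra).
split; [exact Hu'|].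
assert (Hsp := sqrt_lt_R0 _ Hu'). assert (Hsp3 := pow_lt _ 3 Hsp).
assert (E : turning s t = turning s t / sqrt (speed2 s t) ^ 3 * sqrt (speed2 s t) ^ 3)
  by (field; lra).
rewrite E. apply Rmult_lt_0_compat; auto.
Qed.

Lemma speed_div_curv_eq_integrand s t : 0 <= s <= 2 * L -> c0 <= t <= d0 ->
  speed (fun u => Vx u t) (fun u => Vy u t) s / curv (fun u => Vx u t) (fun u => Vy u t) s
  = integrand s t.
Proof.
intros Hs Ht. destruct (speed2_turning_pos s t Hs Ht) as [Hu Hc].
rewrite speed_slice, curv_slice.
assert (Hsq := sqrt_sqrt _ (Rlt_le _ _ Hu)). assert (Hsp := sqrt_lt_R0 _ Hu).
replace (integrand s t) with ((sqrt (speed2 s t) * sqrt (speed2 s t)) ^ 2 / turning s t)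
  by (rewrite Hsq; reflexivity).
field. split; lra.
Qed.

Lemma Fvar_eq_RInt_integrand t : c0 <= t <= d0 ->
  Fvar L Vx Vy t = RInt (fun s => integrand s t) 0 (2 * L).
Proof.
intro Ht. apply RInt_ext. intros s Hs.
rewrite Rmin_left, Rmax_right in Hs by lra.
apply speed_div_curv_eq_integrand; auto; lra.
Qed.

Definition tube t0 d := fun s t => 0 - d < s < 2 * L + d /\ t0 - d < t < t0 + d.

(* By compactness of [0, 2L], the turning [V_s x V_ss] stays positive on a tube around each
   time slice, so the integrand has no singularity there. *)
Lemma integrand_smooth_near t0 : c0 <= t0 <= d0 ->
  exists d, 0 < d /\ (forall s t, tube t0 d s t -> U0 s t /\ 0 < turning s t) /\
    smooth2 (tube t0 d) integrand.
Proof.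
intro Ht0. assert (Hseg : forall s, 0 <= s <= 2 * L -> U0 s t0) by (intros; apply U0_segment; auto).
destruct (smooth2_speed2_turning U0 U0_open (fun _ _ H => H)) as [_ Sc].
destruct (positive_near_segment turning 0 (2 * L) t0) as [d1 [Hd1 H1]].
{ lra. }
{ intros s Hs. apply (smooth2_continuity U0); auto. }
{ intros s Hs. apply (speed2_turning_pos s t0 Hs Ht0). }
set (d := Rmin e d1).
assert (d <= e) by apply Rmin_l. assert (d <= d1) by apply Rmin_r.
assert (Hsub : forall s t, tube t0 d s t -> U0 s t) by (unfold tube, U0; intros; lra).
assert (Hturn : forall s t, tube t0 d s t -> 0 < turning s t)
  by (intros s t [Hs Ht]; apply H1; [lra|apply Rabs_def1; lra]).
assert (Hopen : open2 (tube t0 d)) by apply open2_rectangle.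
exists d. split; [apply Rmin_glb_lt; auto|]. split; [auto|].
destruct (smooth2_speed2_turning (tube t0 d) Hopen Hsub) as [Su' Sc'].
apply (smooth2_ext _ Hopen (fun s t => (speed2 s t * speed2 s t) * / turning s t)).
- intros s t _. unfold integrand, sq_dot_div_cross, speed2, turning. unfold Rdiv. ring.
- apply smooth2_mult; auto. apply smooth2_mult; auto.
  apply smooth2_inv; auto. intros s t Hst. specialize (Hturn s t Hst). lra.
Qed.

Lemma is_derive_RInt_integrand t0 : c0 <= t0 <= d0 ->
  is_derive (fun t => RInt (fun s => integrand s t) 0 (2 * L)) t0
    (RInt (fun s => d_t integrand s t0) 0 (2 * L)).
Proof.
intro Ht0. destruct (integrand_smooth_near t0 Ht0) as [d [Hd [_ Hsm]]].
apply (is_derive_RInt_smooth2 (tube t0 d) _ _ _ _ d); auto; [lra|apply open2_rectangle|].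
intros s t Hs Ht. apply Rabs_def2 in Ht. unfold tube; lra.
Qed.

Lemma is_derive2_RInt_integrand :
  is_derive (fun t => RInt (fun s => d_t integrand s t) 0 (2 * L)) 0
    (RInt (fun s => d_t (d_t integrand) s 0) 0 (2 * L)).
Proof.
destruct (integrand_smooth_near 0 ltac:(lra)) as [d [Hd [_ Hsm]]].
apply (is_derive_RInt_smooth2 (tube 0 d) _ _ _ _ d); auto using smooth2_dt;
  [lra|apply open2_rectangle|].
intros s t Hs Ht. apply Rabs_def2 in Ht. unfold tube; lra.
Qed.

Let TH := tangent_angle x0 L.
Let HH := curvature x0 L.
Let AL := curvature_rate x0 L.

Lemma curve_derivatives_on_segment u : 0 <= u <= 2 * L ->
  is_derive TH u (HH u) /\ is_derive HH u (AL * (u - L) * HH u ^ 3).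
Proof.
intro Hu. assert (Hd := gamma_domain_segment x0 L Hx0 HL u Hu).
split; [apply is_derive_tangent_angle|apply is_derive_curvature]; auto.
Qed.

Lemma is_derive_d_s (W : R -> R -> R) u t : smooth2 U0 W -> 0 <= u <= 2 * L -> c0 <= t <= d0 ->
  is_derive (fun s => W s t) u (d_s W u t).
Proof. intros HW Hu Ht. apply Derive_correct, (smooth2_ex_derive_s U0); auto using U0_segment. Qed.

Lemma is_derive_d_t (W : R -> R -> R) u t : smooth2 U0 W -> 0 <= u <= 2 * L -> c0 <= t <= d0 ->
  is_derive (fun t => W u t) t (d_t W u t).
Proof. intros HW Hu Ht. apply Derive_correct, (smooth2_ex_derive_t U0); auto using U0_segment. Qed.

Lemma gamma_frame u : 0 <= u <= 2 * L ->
  d_s Vx u 0 = frame_x 0 1 (TH u) /\ d_s Vy u 0 = frame_y 0 1 (TH u) /\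
  d_s (d_s Vx) u 0 = frame_x (- HH u) 0 (TH u) /\ d_s (d_s Vy) u 0 = frame_y (- HH u) 0 (TH u).
Proof.
assert (H1 : forall u, 0 <= u <= 2 * L ->
  d_s Vx u 0 = frame_x 0 1 (TH u) /\ d_s Vy u 0 = frame_y 0 1 (TH u)).
{ intros w Hw. assert (Hd := gamma_domain_segment x0 L Hx0 HL w Hw).
  unfold frame_x, frame_y. split.
  - transitivity (cos (TH w)); [|ring].
    apply (derive_eq_on_segment (fun s => Vx s 0) (gam_x x0 L) 0 (2 * L) w); [lra|auto| | |].
    + apply is_derive_d_s; auto; lra.
    + apply is_derive_gam_x; auto.
    + intros; apply Hinit; auto.
  - transitivity (sin (TH w)); [|ring].
    apply (derive_eq_on_segment (fun s => Vy s 0) (gam_y x0 L) 0 (2 * L) w); [lra|auto| | |].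
    + apply is_derive_d_s; auto; lra.
    + apply is_derive_gam_y; auto.
    + intros; apply Hinit; auto. }
intro Hu. destruct (H1 u Hu) as [Ea Eb]. split; [exact Ea|]. split; [exact Eb|].
destruct (frame_derive_on_segment 0 (2 * L) TH HH (fun _ => 0) (fun _ => 1) (fun _ => 0) (fun _ => 0)
  (fun s => d_s Vx s 0) (fun s => d_s Vy s 0)
  (fun s => d_s (d_s Vx) s 0) (fun s => d_s (d_s Vy) s 0)) with u as [Ec Ed]; auto.
- lra.
- intros w Hw. split; [apply curve_derivatives_on_segment; auto|].
  split; [exact (is_derive_const 0 w)|exact (is_derive_const 1 w)].
- intros w Hw. split; apply is_derive_d_s; auto using smooth2_ds; lra.
- rewrite Ec, Ed. replace (0 - HH u * 1) with (- HH u) by ring.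
  replace (HH u * 0 + 0) with 0 by ring. auto.
Qed.

Definition coefN1 (A B : R -> R) u := Derive A u - HH u * B u.
Definition coefT1 (A B : R -> R) u := HH u * A u + Derive B u.
Definition coefN2 (A B : R -> R) u :=
  Derive (Derive A) u - (AL * (u - L) * HH u ^ 3 * B u + HH u * Derive B u) - HH u * coefT1 A B u.
Definition coefT2 (A B : R -> R) u :=
  HH u * coefN1 A B u + (AL * (u - L) * HH u ^ 3 * A u + HH u * Derive A u + Derive (Derive B) u).

Lemma frame_d_s (W1 W2 : R -> R -> R) (A B : R -> R) :
  smooth2 U0 W1 -> smooth2 U0 W2 -> smooth_near 0 (2 * L) A -> smooth_near 0 (2 * L) B ->
  (forall u, 0 <= u <= 2 * L ->
     W1 u 0 = frame_x (A u) (B u) (TH u) /\ W2 u 0 = frame_y (A u) (B u) (TH u)) ->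
  forall u, 0 <= u <= 2 * L ->
    (d_s W1 u 0 = frame_x (coefN1 A B u) (coefT1 A B u) (TH u) /\
     d_s W2 u 0 = frame_y (coefN1 A B u) (coefT1 A B u) (TH u)) /\
    (d_s (d_s W1) u 0 = frame_x (coefN2 A B u) (coefT2 A B u) (TH u) /\
     d_s (d_s W2) u 0 = frame_y (coefN2 A B u) (coefT2 A B u) (TH u)).
Proof.
intros S1 S2 HA HB Hframe.
assert (Ht0 : c0 <= 0 <= d0) by lra.
assert (H1 := frame_derive_on_segment 0 (2 * L) TH HH A B (Derive A) (Derive B)
  (fun s => W1 s 0) (fun s => W2 s 0) (fun s => d_s W1 s 0) (fun s => d_s W2 s 0)).
assert (E1 : forall u, 0 <= u <= 2 * L ->
    d_s W1 u 0 = frame_x (coefN1 A B u) (coefT1 A B u) (TH u) /\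
    d_s W2 u 0 = frame_y (coefN1 A B u) (coefT1 A B u) (TH u)).
{ apply H1; auto; [lra| |].
  - intros u Hu. split; [apply curve_derivatives_on_segment; auto|].
    split; apply (smooth_near_is_derive 0 (2 * L)); auto.
  - intros u Hu. split; apply is_derive_d_s; auto. }
intros u Hu. split; [exact (E1 u Hu)|].
apply (frame_derive_on_segment 0 (2 * L) TH HH (coefN1 A B) (coefT1 A B)
  (fun u => Derive (Derive A) u - (AL * (u - L) * HH u ^ 3 * B u + HH u * Derive B u))
  (fun u => AL * (u - L) * HH u ^ 3 * A u + HH u * Derive A u + Derive (Derive B) u)
  (fun s => d_s W1 s 0) (fun s => d_s W2 s 0)
  (fun s => d_s (d_s W1) s 0) (fun s => d_s (d_s W2) s 0)); auto; [lra| |].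
- intros w Hw. destruct (curve_derivatives_on_segment w Hw) as [Ht Hh].
  assert (HA1 := smooth_near_is_derive 0 (2 * L) A w HA Hw).
  assert (HA2 := smooth_near_is_derive2 0 (2 * L) A w HA Hw).
  assert (HB1 := smooth_near_is_derive 0 (2 * L) B w HB Hw).
  assert (HB2 := smooth_near_is_derive2 0 (2 * L) B w HB Hw).
  split; [exact Ht|]. unfold coefN1, coefT1. split.
  + apply (is_derive_minus (Derive A) (fun u => HH u * B u)); auto.
    apply (is_derive_mult HH B); auto. intros; apply Rmult_comm.
  + apply (is_derive_plus (fun u => HH u * A u) (Derive B)); auto.
    apply (is_derive_mult HH A); auto. intros; apply Rmult_comm.
- intros w Hw. split; apply is_derive_d_s; auto using smooth2_ds; lra.
Qed.

Variables phi phit psi psit : R -> R.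
Hypothesis Hphi : smooth_near 0 (2 * L) phi.
Hypothesis Hphit : smooth_near 0 (2 * L) phit.
Hypothesis Hpsi : smooth_near 0 (2 * L) psi.
Hypothesis Hpsit : smooth_near 0 (2 * L) psit.
Hypothesis Hvel : forall s, 0 <= s <= 2 * L ->
  vel Vx s = phi s * normal_x (gam_x x0 L) (gam_y x0 L) s + phit s * Derive (gam_x x0 L) s /\
  vel Vy s = phi s * normal_y (gam_x x0 L) (gam_y x0 L) s + phit s * Derive (gam_y x0 L) s.
Hypothesis Hacc : forall s, 0 <= s <= 2 * L ->
  acc Vx s = psi s * normal_x (gam_x x0 L) (gam_y x0 L) s + psit s * Derive (gam_x x0 L) s /\
  acc Vy s = psi s * normal_y (gam_x x0 L) (gam_y x0 L) s + psit s * Derive (gam_y x0 L) s.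

Lemma decomposition_frame (A B vx vy : R -> R) :
  (forall s, 0 <= s <= 2 * L ->
    vx s = A s * normal_x (gam_x x0 L) (gam_y x0 L) s + B s * Derive (gam_x x0 L) s /\
    vy s = A s * normal_y (gam_x x0 L) (gam_y x0 L) s + B s * Derive (gam_y x0 L) s) ->
  forall s, 0 <= s <= 2 * L ->
    vx s = frame_x (A s) (B s) (TH s) /\ vy s = frame_y (A s) (B s) (TH s).
Proof.
intros H s Hs. assert (Hd := gamma_domain_segment x0 L Hx0 HL s Hs).
destruct (H s Hs) as [Ex Ey].
rewrite normal_x_gamma, Derive_gam_x in Ex by auto.
rewrite normal_y_gamma, Derive_gam_y in Ey by auto.
unfold frame_x, frame_y. split; [rewrite Ex|rewrite Ey]; unfold TH; ring.
Qed.

Lemma velocity_frame s : 0 <= s <= 2 * L ->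
  vel Vx s = frame_x (phi s) (phit s) (TH s) /\ vel Vy s = frame_y (phi s) (phit s) (TH s).
Proof. exact (decomposition_frame phi phit (vel Vx) (vel Vy) Hvel s). Qed.

Lemma acceleration_frame s : 0 <= s <= 2 * L ->
  acc Vx s = frame_x (psi s) (psit s) (TH s) /\ acc Vy s = frame_y (psi s) (psit s) (TH s).
Proof. exact (decomposition_frame psi psit (acc Vx) (acc Vy) Hacc s). Qed.

Definition variation_density s :=
  second_variation_density AL L s (HH s) (phi s) (Derive phi s) (Derive (Derive phi) s)
    (phit s) (Derive phit s) (Derive (Derive phit) s)
    (psi s) (Derive psi s) (Derive (Derive psi) s) (psit s) (Derive psit s).

Lemma d_t2_integrand s : 0 <= s <= 2 * L -> d_t (d_t integrand) s 0 = variation_density s.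
Proof.
intro Hs. assert (Ht0 : c0 <= 0 <= d0) by lra.
destruct (integrand_smooth_near 0 Ht0) as [d [Hd [Hsub _]]].
assert (Hopen : open2 (tube 0 d)) by apply open2_rectangle.
assert (Hs0 : tube 0 d s 0) by (unfold tube; lra).
assert (HU0 : U0 s 0) by (apply U0_segment; lra).
assert (Hdt : forall W, smooth2 U0 W -> forall t, tube 0 d s t ->
  is_derive (fun t => W s t) t (d_t W s t)).
{ intros W HW t Ht. apply Derive_correct, (smooth2_ex_derive_t U0); auto. apply Hsub; auto. }
transitivity (sq_div_d2
  (dot2 (d_s Vx s 0) (d_s Vy s 0) (d_s Vx s 0) (d_s Vy s 0))
  (2 * dot2 (d_s Vx s 0) (d_s Vy s 0) (d_t (d_s Vx) s 0) (d_t (d_s Vy) s 0))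
  (2 * (dot2 (d_t (d_s Vx) s 0) (d_t (d_s Vy) s 0) (d_t (d_s Vx) s 0) (d_t (d_s Vy) s 0)
        + dot2 (d_s Vx s 0) (d_s Vy s 0) (d_t (d_t (d_s Vx)) s 0) (d_t (d_t (d_s Vy)) s 0)))
  (cross2 (d_s Vx s 0) (d_s Vy s 0) (d_s (d_s Vx) s 0) (d_s (d_s Vy) s 0))
  (cross2 (d_t (d_s Vx) s 0) (d_t (d_s Vy) s 0) (d_s (d_s Vx) s 0) (d_s (d_s Vy) s 0)
   + cross2 (d_s Vx s 0) (d_s Vy s 0) (d_t (d_s (d_s Vx)) s 0) (d_t (d_s (d_s Vy)) s 0))
  (cross2 (d_t (d_t (d_s Vx)) s 0) (d_t (d_t (d_s Vy)) s 0) (d_s (d_s Vx) s 0) (d_s (d_s Vy) s 0)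
   + 2 * cross2 (d_t (d_s Vx) s 0) (d_t (d_s Vy) s 0)
           (d_t (d_s (d_s Vx)) s 0) (d_t (d_s (d_s Vy)) s 0)
   + cross2 (d_s Vx s 0) (d_s Vy s 0)
       (d_t (d_t (d_s (d_s Vx))) s 0) (d_t (d_t (d_s (d_s Vy))) s 0))).
{ apply is_derive_unique.
  apply (is_derive2_sq_dot_div_cross (fun t => d_s Vx s t) (fun t => d_s Vy s t)
    (fun t => d_s (d_s Vx) s t) (fun t => d_s (d_s Vy) s t)
    (fun t => d_t (d_s Vx) s t) (fun t => d_t (d_s Vy) s t)
    (fun t => d_t (d_s (d_s Vx)) s t) (fun t => d_t (d_s (d_s Vy)) s t));
    try (apply Hdt; auto using smooth2_ds, smooth2_dt).
  apply (open2_locally_snd _ Hopen _ s 0 Hs0). intros t Ht.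
  destruct (Hsub s t Ht) as [_ Hturn]. unfold turning in Hturn.
  repeat split; try (apply Hdt; auto using smooth2_ds); lra. }
rewrite !(smooth2_d_t_d_s U0 U0_open), !(smooth2_d_t_d_s_s U0 U0_open),
  !(smooth2_d_t_t_d_s U0 U0_open), !(smooth2_d_t_t_d_s_s U0 U0_open) by auto.
destruct (gamma_frame s Hs) as [Ea [Eb [Ec Ed]]].
destruct (frame_d_s (d_t Vx) (d_t Vy) phi phit (smooth2_dt _ _ HVx) (smooth2_dt _ _ HVy)
  Hphi Hphit velocity_frame s Hs) as [[Ev1 Ev2] [Ev3 Ev4]].
destruct (frame_d_s (d_t (d_t Vx)) (d_t (d_t Vy)) psi psit
  (smooth2_dt _ _ (smooth2_dt _ _ HVx)) (smooth2_dt _ _ (smooth2_dt _ _ HVy))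
  Hpsi Hpsit acceleration_frame s Hs) as [[Ea1 Ea2] [Ea3 Ea4]].
rewrite Ea, Eb, Ec, Ed, Ev1, Ev2, Ev3, Ev4, Ea1, Ea2, Ea3, Ea4.
rewrite !dot2_frame, !cross2_frame.
unfold variation_density, second_variation_density, coefN2, coefT2, coefN1, coefT1. cbv zeta.
f_equal; ring.
Qed.

Definition reduced_density_at s :=
  reduced_density AL (HH s) (phi s) (Derive phi s) (Derive (Derive phi) s)
    (phit s) (Derive phit s) (psi s).

Definition boundary s :=
  boundary_term AL L phi (Derive phi) phit (Derive phit) psi (Derive psi) psit HH s.

Lemma curvature_pos_segment s : 0 <= s <= 2 * L -> 0 < HH s.
Proof. intro Hs. apply curvature_pos; auto. apply gamma_domain_segment; auto. Qed.

Lemma continuous_reduced_density s : 0 <= s <= 2 * L -> continuous reduced_density_at s.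
Proof.
intro Hs. assert (Hh := curvature_pos_segment s Hs).
destruct (smooth_near_continuous _ _ phi s Hphi Hs) as [Cf [Cf1 Cf2]].
destruct (smooth_near_continuous _ _ phit s Hphit Hs) as [Cp [Cp1 _]].
destruct (smooth_near_continuous _ _ psi s Hpsi Hs) as [Cq _].
assert (Ch : continuous HH s).
{ apply (ex_derive_continuous (V := R_NormedModule)). eexists.
  apply curve_derivatives_on_segment; auto. }
unfold reduced_density_at, reduced_density. repeat continuity_step; auto.
all: try apply pow_nonzero; lra.
Qed.

Lemma continuous_d_t2_integrand s : 0 <= s <= 2 * L ->
  continuous (fun u => d_t (d_t integrand) u 0) s.
Proof.
intro Hs. destruct (integrand_smooth_near 0 ltac:(lra)) as [d [Hd [_ Hsm]]].
apply (smooth2_continuous_fst (tube 0 d)); auto using smooth2_dt.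
unfold tube; lra.
Qed.

Lemma RInt_d_t2_integrand :
  RInt (fun s => d_t (d_t integrand) s 0) 0 (2 * L)
  = RInt reduced_density_at 0 (2 * L) + (boundary (2 * L) - boundary 0).
Proof.
rewrite (RInt_ext _ (fun s => reduced_density_at s
  + (d_t (d_t integrand) s 0 - reduced_density_at s))) by (intros; symmetry; apply Rplus_minus).
rewrite (RInt_plus (V := R_CompleteNormedModule) reduced_density_at
  (fun s => d_t (d_t integrand) s 0 - reduced_density_at s)).
- apply (f_equal2 Rplus eq_refl). apply RInt_of_is_derive; [lra| |].
  + intros u Hu. rewrite d_t2_integrand by auto. unfold boundary.
    assert (Hh := curvature_pos_segment u Hu).
    apply is_derive_boundary_term; [| | | | | | |apply curve_derivatives_on_segment; auto|lra];
      first [apply (smooth_near_is_derive2 0 (2 * L)); now auto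
            |apply (smooth_near_is_derive 0 (2 * L)); now auto].
  + intros u Hu. repeat continuity_step;
      auto using continuous_d_t2_integrand, continuous_reduced_density.
- apply ex_RInt_of_continuous; [lra|]. exact continuous_reduced_density.
- apply ex_RInt_of_continuous; [lra|]. intros u Hu. repeat continuity_step;
    auto using continuous_d_t2_integrand, continuous_reduced_density.
Qed.

Lemma RInt_reduced_density :
  RInt reduced_density_at 0 (2 * L) =
  I1 L (gam_x x0 L) (gam_y x0 L) phi + lambda0 x0 L * I2 L (gam_x x0 L) (gam_y x0 L) phi phit psi.
Proof.
rewrite lambda0_curvature_rate by auto. fold AL. unfold I1, I2.
set (f1 := fun s => 2 * HH s * phi s ^ 2 - 2 * Derive phi s ^ 2 / HH s
  + 2 * Derive (Derive phi) s ^ 2 / HH s ^ 3).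
set (f2 := fun s => psi s + HH s * phit s ^ 2 + 2 * phi s * Derive phit s).
assert (Hcurv : forall s, Rmin 0 (2 * L) < s < Rmax 0 (2 * L) ->
  curv (gam_x x0 L) (gam_y x0 L) s = HH s).
{ intros s Hs. rewrite Rmin_left, Rmax_right in Hs by lra.
  apply curv_gamma; auto. apply gamma_domain_segment; lra. }
rewrite (RInt_ext (fun s => 2 * curv (gam_x x0 L) (gam_y x0 L) s * phi s ^ 2 - _ + _) f1)
  by (intros s Hs; unfold f1; rewrite Hcurv; auto).
rewrite (RInt_ext (fun s => psi s + curv (gam_x x0 L) (gam_y x0 L) s * phit s ^ 2 + _) f2)
  by (intros s Hs; unfold f2; rewrite Hcurv; auto).
assert (Hcont : forall s, 0 <= s <= 2 * L -> continuous f1 s /\ continuous f2 s).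
{ intros s Hs. assert (Hh := curvature_pos_segment s Hs).
  destruct (smooth_near_continuous _ _ phi s Hphi Hs) as [Cf [Cf1 Cf2]].
  destruct (smooth_near_continuous _ _ phit s Hphit Hs) as [Cp [Cp1 _]].
  destruct (smooth_near_continuous _ _ psi s Hpsi Hs) as [Cq _].
  assert (Ch : continuous HH s).
  { apply (ex_derive_continuous (V := R_NormedModule)). eexists.
    apply curve_derivatives_on_segment; auto. }
  unfold f1, f2. split; repeat continuity_step; auto; try apply pow_nonzero; lra. }
assert (E1 : ex_RInt f1 0 (2 * L)) by (apply ex_RInt_of_continuous; [lra|apply Hcont]).
assert (E2 : ex_RInt f2 0 (2 * L)) by (apply ex_RInt_of_continuous; [lra|apply Hcont]).
transitivity (RInt (fun s => f1 s + (2 - 2 * AL) * f2 s) 0 (2 * L)); [reflexivity|].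
rewrite (RInt_plus (V := R_CompleteNormedModule) f1 (fun s => (2 - 2 * AL) * f2 s));
  [|exact E1|apply (ex_RInt_scal (V := R_CompleteNormedModule)); exact E2].
assert (Es : RInt (fun s => (2 - 2 * AL) * f2 s) 0 (2 * L) = (2 - 2 * AL) * RInt f2 0 (2 * L))
  by (apply (RInt_scal (V := R_CompleteNormedModule)); exact E2).
rewrite Es. reflexivity.
Qed.

Lemma fixed_slice_vel_acc (W : R -> R -> R) s0 cst : smooth2 U0 W -> 0 <= s0 <= 2 * L ->
  (forall t, c0 <= t <= d0 -> W s0 t = cst) -> vel W s0 = 0 /\ acc W s0 = 0.
Proof.
intros HW Hs0 Hcst.
assert (Hdt : forall t, c0 <= t <= d0 -> d_t W s0 t = 0).
{ intros t Ht. apply (derive_eq_on_segment (fun t => W s0 t) (fun _ => cst) c0 d0 t); auto; [lra| |].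
  - apply is_derive_d_t; auto.
  - exact (is_derive_const cst t). }
split; [apply Hdt; lra|].
apply (derive_eq_on_segment (fun t => d_t W s0 t) (fun _ => 0) c0 d0 0); [lra|lra| | |auto].
- apply (is_derive_d_t (d_t W)); auto using smooth2_dt; lra.
- exact (is_derive_const 0 0).
Qed.

Lemma endpoint_coefficients s0 : s0 = 0 \/ s0 = 2 * L ->
  phi s0 = 0 /\ phit s0 = 0 /\ psi s0 = 0 /\ psit s0 = 0.
Proof.
intro Hs0. assert (Hseg : 0 <= s0 <= 2 * L) by (destruct Hs0; lra).
assert (Hth : sin (TH s0) = 0 /\ cos (TH s0) = 1).
{ destruct Hs0 as [->| ->]; unfold TH.
  - rewrite tangent_angle_0 by auto. split; [apply sin_0|apply cos_0].
  - rewrite tangent_angle_2L by auto. split; [apply sin_2PI|apply cos_2PI]. }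
assert (Hfix : exists cx, forall t, c0 <= t <= d0 -> Vx s0 t = cx /\ Vy s0 t = 0).
{ destruct Hs0 as [->| ->]; [exists x0|exists (- x0)]; intros t Ht;
    destruct (Hadm t Ht) as [_ [_ [_ [_ [_ [Hx0' [Hy0' [Hx2 [Hy2 _]]]]]]]]]; auto. }
destruct Hfix as [cx Hfix].
destruct (fixed_slice_vel_acc Vx s0 _ HVx Hseg (fun t Ht => proj1 (Hfix t Ht))) as [Vx1 Vx2].
destruct (fixed_slice_vel_acc Vy s0 _ HVy Hseg (fun t Ht => proj2 (Hfix t Ht))) as [Vy1 Vy2].
destruct (velocity_frame s0 Hseg) as [Ev1 Ev2].
destruct (acceleration_frame s0 Hseg) as [Ea1 Ea2].
unfold frame_x, frame_y in *. destruct Hth as [Hs Hc]. rewrite Hs, Hc in *.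
repeat split; lra.
Qed.

Lemma boundary_endpoint s0 : s0 = 0 \/ s0 = 2 * L ->
  boundary s0 = (Derive psi s0 - 2 * Derive phi s0 * Derive phit s0)
                / curv (gam_x x0 L) (gam_y x0 L) s0 ^ 2.
Proof.
intro Hs0. assert (Hseg : 0 <= s0 <= 2 * L) by (destruct Hs0; lra).
destruct (endpoint_coefficients s0 Hs0) as [E1 [E2 [E3 E4]]].
rewrite curv_gamma by (auto; apply gamma_domain_segment; auto).
assert (Hh := curvature_pos_segment s0 Hseg). fold HH.
unfold boundary, boundary_term. rewrite E1, E2, E3, E4. field. lra.
Qed.

Lemma RInt_d_t2_integrand_formula :
  RInt (fun s => d_t (d_t integrand) s 0) 0 (2 * L) =
  I1 L (gam_x x0 L) (gam_y x0 L) phi + lambda0 x0 L * I2 L (gam_x x0 L) (gam_y x0 L) phi phit psi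
  + ((Derive psi (2 * L) - 2 * Derive phi (2 * L) * Derive phit (2 * L))
       / curv (gam_x x0 L) (gam_y x0 L) (2 * L) ^ 2
     - (Derive psi 0 - 2 * Derive phi 0 * Derive phit 0) / curv (gam_x x0 L) (gam_y x0 L) 0 ^ 2).
Proof.
rewrite RInt_d_t2_integrand, RInt_reduced_density, !boundary_endpoint by auto.
reflexivity.
Qed.

Lemma endpoint_vertical_derivatives s0 : s0 = 0 \/ s0 = 2 * L ->
  d_s Vy s0 0 = 0 /\ d_t (d_s Vy) s0 0 = - Derive phi s0 /\
  d_t (d_t (d_s Vy)) s0 0 = - Derive psi s0.
Proof.
intro Hs0. assert (Hseg : 0 <= s0 <= 2 * L) by (destruct Hs0; lra).
assert (HU : U0 s0 0) by (apply U0_segment; lra).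
assert (Hth : sin (TH s0) = 0 /\ cos (TH s0) = 1).
{ destruct Hs0 as [->| ->]; unfold TH.
  - rewrite tangent_angle_0 by auto. split; [apply sin_0|apply cos_0].
  - rewrite tangent_angle_2L by auto. split; [apply sin_2PI|apply cos_2PI]. }
destruct (endpoint_coefficients s0 Hs0) as [_ [E2 [_ E4]]].
destruct (gamma_frame s0 Hseg) as [_ [Eb _]].
destruct (frame_d_s (d_t Vx) (d_t Vy) phi phit (smooth2_dt _ _ HVx) (smooth2_dt _ _ HVy)
  Hphi Hphit velocity_frame s0 Hseg) as [[_ Ev] _].
destruct (frame_d_s (d_t (d_t Vx)) (d_t (d_t Vy)) psi psit
  (smooth2_dt _ _ (smooth2_dt _ _ HVx)) (smooth2_dt _ _ (smooth2_dt _ _ HVy))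
  Hpsi Hpsit acceleration_frame s0 Hseg) as [[_ Ea] _].
rewrite (smooth2_d_t_d_s U0 U0_open), (smooth2_d_t_t_d_s U0 U0_open) by auto.
rewrite Eb, Ev, Ea. unfold frame_y, coefN1, coefT1.
destruct Hth as [Hs Hc]. rewrite Hs, Hc, E2, E4. repeat split; ring.
Qed.

Lemma Fvar_second_variation : exists g : R -> R,
  (forall t, c0 <= t <= d0 -> Fvar L Vx Vy t = RInt (fun s => integrand s t) 0 (2 * L) /\
     is_derive (fun t => RInt (fun s => integrand s t) 0 (2 * L)) t (g t)) /\
  is_derive g 0
    (I1 L (gam_x x0 L) (gam_y x0 L) phi + lambda0 x0 L * I2 L (gam_x x0 L) (gam_y x0 L) phi phit psi
     + ((Derive psi (2 * L) - 2 * Derive phi (2 * L) * Derive phit (2 * L))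
          / curv (gam_x x0 L) (gam_y x0 L) (2 * L) ^ 2
        - (Derive psi 0 - 2 * Derive phi 0 * Derive phit 0)
          / curv (gam_x x0 L) (gam_y x0 L) 0 ^ 2)).
Proof.
exists (fun t => RInt (fun s => d_t integrand s t) 0 (2 * L)). split.
- intros t Ht. split; [apply Fvar_eq_RInt_integrand|apply is_derive_RInt_integrand]; auto.
- rewrite <- RInt_d_t2_integrand_formula. exact is_derive2_RInt_integrand.
Qed.

Lemma endpoint_slope_signs t : c0 <= t <= d0 -> 0 <= d_s Vy 0 t /\ d_s Vy (2 * L) t <= 0.
Proof.
intro Ht. destruct (Hadm t Ht) as [_ [_ [_ [_ [_ [_ [Hy0 [_ [Hy2 Hpos]]]]]]]]].
split.
- apply (derive_ge0_of_right_min (fun s => Vy s t) 0 _ (2 * L)); [apply is_derive_d_s; auto; lra|lra|].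
  intros s Hs. cbv beta. rewrite Hy0. apply Rlt_le, Hpos. lra.
- apply (derive_le0_of_left_min (fun s => Vy s t) (2 * L) _ (2 * L));
    [apply is_derive_d_s; auto; lra|lra|].
  intros s Hs. cbv beta. rewrite Hy2. apply Rlt_le, Hpos. lra.
Qed.

Lemma two_sided_endpoint_conditions : c0 < 0 ->
  Derive phi 0 = 0 /\ Derive phi (2 * L) = 0 /\ Derive psi 0 <= 0 /\ 0 <= Derive psi (2 * L).
Proof.
intro Hc0n. set (dd := Rmin (- c0) d0).
assert (Hdd : 0 < dd) by (apply Rmin_glb_lt; lra).
assert (Hin : forall t, Rabs t < dd -> c0 <= t <= d0).
{ intros t Ht. apply Rabs_def2 in Ht.
  assert (dd <= - c0) by apply Rmin_l. assert (dd <= d0) by apply Rmin_r. lra. }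
assert (Hin' : forall t, 0 - dd < t < 0 + dd -> c0 <= t <= d0)
  by (intros t Ht; apply Hin, Rabs_def1; lra).
assert (Ht0 : c0 <= 0 <= d0) by lra.
assert (Hdt : forall s0 t, 0 <= s0 <= 2 * L -> c0 <= t <= d0 ->
  is_derive (fun u => d_s Vy s0 u) t (d_t (d_s Vy) s0 t))
  by (intros; apply is_derive_d_t; auto using smooth2_ds).
assert (Hdt2 : forall s0, 0 <= s0 <= 2 * L ->
  is_derive (fun u => d_t (d_s Vy) s0 u) 0 (d_t (d_t (d_s Vy)) s0 0))
  by (intros; apply is_derive_d_t; auto using smooth2_ds, smooth2_dt).
destruct (endpoint_vertical_derivatives 0 (or_introl eq_refl)) as [Z0 [D0 S0]].
destruct (endpoint_vertical_derivatives (2 * L) (or_intror eq_refl)) as [Z2 [D2 S2]].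
assert (A0 : 0 <= 0 <= 2 * L) by lra. assert (A2 : 0 <= 2 * L <= 2 * L) by lra.
assert (Dphi0 : d_t (d_s Vy) 0 0 = 0).
{ apply (derive_eq0_of_local_min (fun u => d_s Vy 0 u) 0 _ dd (Hdt 0 0 A0 Ht0) Hdd).
  intros t Ht. rewrite Z0. apply endpoint_slope_signs; auto. }
assert (Dphi2 : d_t (d_s Vy) (2 * L) 0 = 0).
{ apply (derive_eq0_of_local_max (fun u => d_s Vy (2 * L) u) 0 _ dd (Hdt _ 0 A2 Ht0) Hdd).
  intros t Ht. rewrite Z2. apply endpoint_slope_signs; auto. }
assert (Dpsi0 : 0 <= d_t (d_t (d_s Vy)) 0 0).
{ apply (second_derive_ge0_of_local_min (fun u => d_s Vy 0 u) (fun u => d_t (d_s Vy) 0 u) _ dd);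
    auto.
  intros t Ht. rewrite Z0. apply endpoint_slope_signs; auto. }
assert (Dpsi2 : d_t (d_t (d_s Vy)) (2 * L) 0 <= 0).
{ apply (second_derive_le0_of_local_max (fun u => d_s Vy (2 * L) u)
    (fun u => d_t (d_s Vy) (2 * L) u) _ dd); auto.
  intros t Ht. rewrite Z2. apply endpoint_slope_signs; auto. }
repeat split; lra.
Qed.

End Variation.

Lemma smooth2_on_common a b c d (f g : R -> R -> R) :
  smooth2_on a b c d f -> smooth2_on a b c d g -> exists e, 0 < e /\
    smooth2 (fun s t => a - e < s < b + e /\ c - e < t < d + e) f /\
    smooth2 (fun s t => a - e < s < b + e /\ c - e < t < d + e) g.
Proof.
intros [e1 [He1 Hf]] [e2 [He2 Hg]].
set (e := Rmin e1 e2). assert (e <= e1) by apply Rmin_l. assert (e <= e2) by apply Rmin_r.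
exists e. split; [apply Rmin_glb_lt; auto|].
split; [apply (smooth2_sub (fun s t => a - e1 < s < b + e1 /\ c - e1 < t < d + e1))
       |apply (smooth2_sub (fun s t => a - e2 < s < b + e2 /\ c - e2 < t < d + e2))];
  auto; intros s t Hst; lra.
Qed.

Lemma curv_gamma_pos x0 L s : 0 < x0 -> 3 * x0 < L -> 0 <= s <= 2 * L ->
  0 < curv (gam_x x0 L) (gam_y x0 L) s.
Proof.
intros Hx0 HL Hs. assert (Hd := gamma_domain_segment x0 L Hx0 HL s Hs).
rewrite curv_gamma by auto. apply curvature_pos; auto.
Qed.

Lemma endpoint_term_nonneg x0 L (psi : R -> R) : 0 < x0 -> 3 * x0 < L ->
  Derive psi 0 <= 0 -> 0 <= Derive psi (2 * L) ->
  0 <= Derive psi (2 * L) / curv (gam_x x0 L) (gam_y x0 L) (2 * L) ^ 2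
       - Derive psi 0 / curv (gam_x x0 L) (gam_y x0 L) 0 ^ 2.
Proof.
intros Hx0 HL H0 H2.
assert (C0 := curv_gamma_pos x0 L 0 Hx0 HL ltac:(lra)).
assert (C2 := curv_gamma_pos x0 L (2 * L) Hx0 HL ltac:(lra)).
assert (0 <= Derive psi (2 * L) / curv (gam_x x0 L) (gam_y x0 L) (2 * L) ^ 2)
  by (apply Rdiv_le_0_compat; [lra|apply pow_lt; lra]).
assert (0 <= - Derive psi 0 / curv (gam_x x0 L) (gam_y x0 L) 0 ^ 2)
  by (apply Rdiv_le_0_compat; [lra|apply pow_lt; lra]).
unfold Rdiv in *. lra.
Qed.

Lemma is_rderiv_of_agree (F G : R -> R) a b t l : a <= t < b ->
  (forall u, a <= u <= b -> F u = G u) -> is_derive G t l -> is_rderiv F t l.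
Proof.
intros Ht HFG HG. apply (is_rderiv_ext_right F G t l (b - t)); [|lra| |].
- apply is_derive_is_rderiv; exact HG.
- intros h Hh. apply HFG. lra.
- apply HFG. lra.
Qed.

Lemma is_derive_of_agree (F G : R -> R) a b t l : a < t < b ->
  (forall u, a <= u <= b -> F u = G u) -> is_derive G t l -> is_derive F t l.
Proof.
intros Ht HFG HG. apply (is_derive_ext_loc G); [|exact HG].
set (r := Rmin (t - a) (b - t)).
assert (r <= t - a) by apply Rmin_l. assert (r <= b - t) by apply Rmin_r.
exists (mkposreal r ltac:(apply Rmin_glb_lt; lra)). intros u Hu.
change (Rabs (u - t) < r) in Hu. apply Rabs_def2 in Hu.
symmetry. apply HFG. lra.
Qed.
Theorem mainTheorem10 :
  forall x0 L : R, 0 < x0 -> 3 * x0 < L ->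
  let x := gam_x x0 L in
  let y := gam_y x0 L in
  let H := curv x y in
  let lam := lambda0 x0 L in
  (forall (Vx Vy : R -> R -> R) (tV : R) (phi phit psi psit : R -> R),
     one_sided_variation x0 L x y Vx Vy tV ->
     smooth_near 0 (2 * L) phi -> smooth_near 0 (2 * L) phit ->
     smooth_near 0 (2 * L) psi -> smooth_near 0 (2 * L) psit ->
     (forall s, 0 <= s <= 2 * L ->
        vel Vx s = phi s * normal_x x y s + phit s * Derive x s /\
        vel Vy s = phi s * normal_y x y s + phit s * Derive y s) ->
     (forall s, 0 <= s <= 2 * L ->
        acc Vx s = psi s * normal_x x y s + psit s * Derive x s /\
        acc Vy s = psi s * normal_y x y s + psit s * Derive y s) ->
     exists g : R -> R,
       (forall t, 0 <= t < tV -> is_rderiv (Fvar L Vx Vy) t (g t)) /\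
       is_rderiv g 0
         (I1 L x y phi + lam * I2 L x y phi phit psi
          + ((Derive psi (2 * L) - 2 * Derive phi (2 * L) * Derive phit (2 * L))
               / H (2 * L) ^ 2
             - (Derive psi 0 - 2 * Derive phi 0 * Derive phit 0) / H 0 ^ 2)))
  /\
  (forall (Vx Vy : R -> R -> R) (tV : R) (phi phit psi psit : R -> R),
     admissible_variation x0 L x y Vx Vy tV ->
     smooth_near 0 (2 * L) phi -> smooth_near 0 (2 * L) phit ->
     smooth_near 0 (2 * L) psi -> smooth_near 0 (2 * L) psit ->
     (forall s, 0 <= s <= 2 * L ->
        vel Vx s = phi s * normal_x x y s + phit s * Derive x s /\
        vel Vy s = phi s * normal_y x y s + phit s * Derive y s) ->
     (forall s, 0 <= s <= 2 * L ->
        acc Vx s = psi s * normal_x x y s + psit s * Derive x s /\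
        acc Vy s = psi s * normal_y x y s + psit s * Derive y s) ->
     Derive phi 0 = 0 /\ Derive phi (2 * L) = 0 /\
     Derive psi 0 <= 0 /\ 0 <= Derive psi (2 * L) /\
     exists (g : R -> R) (d2 : R),
       (forall t, - tV < t < tV -> is_derive (Fvar L Vx Vy) t (g t)) /\
       is_derive g 0 d2 /\
       d2 = I1 L x y phi + lam * I2 L x y phi phit psi
            + (Derive psi (2 * L) / H (2 * L) ^ 2 - Derive psi 0 / H 0 ^ 2) /\
       I1 L x y phi + lam * I2 L x y phi phit psi <= d2).
Proof.
intros x0 L Hx0 HL. cbv zeta. split.
- intros Vx Vy tV phi phit psi psit [HtV [HVx [HVy [Hinit Hadm]]]] Hphi Hphit Hpsi Hpsit Hvel Hacc.
  destruct (smooth2_on_common _ _ _ _ _ _ HVx HVy) as [e [He [SVx SVy]]].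
  destruct (Fvar_second_variation x0 L Hx0 HL Vx Vy 0 tV e ltac:(lra) HtV He SVx SVy Hinit Hadm
    phi phit psi psit Hphi Hphit Hpsi Hpsit Hvel Hacc) as [g [HF Hg]].
  exists g. split; [|apply is_derive_is_rderiv; exact Hg].
  intros t Ht. eapply (is_rderiv_of_agree _ _ 0 tV t); [lra| |].
  + intros u Hu. exact (proj1 (HF u Hu)).
  + exact (proj2 (HF t ltac:(lra))).
- intros Vx Vy tV phi phit psi psit [HtV [HVx [HVy [Hinit Hadm]]]] Hphi Hphit Hpsi Hpsit Hvel Hacc.
  destruct (smooth2_on_common _ _ _ _ _ _ HVx HVy) as [e [He [SVx SVy]]].
  destruct (Fvar_second_variation x0 L Hx0 HL Vx Vy (- tV) tV e ltac:(lra) HtV He SVx SVy Hinit Hadm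
    phi phit psi psit Hphi Hphit Hpsi Hpsit Hvel Hacc) as [g [HF Hg]].
  destruct (two_sided_endpoint_conditions x0 L Hx0 HL Vx Vy (- tV) tV e ltac:(lra) HtV He SVx SVy
    Hinit Hadm phi phit psi psit Hphi Hphit Hpsi Hpsit Hvel Hacc ltac:(lra))
    as [Dphi0 [Dphi2 [Dpsi0 Dpsi2]]].
  rewrite Dphi0, Dphi2, !Rmult_0_r, !Rmult_0_l, !Rminus_0_r in Hg.
  assert (Hb := endpoint_term_nonneg x0 L psi Hx0 HL Dpsi0 Dpsi2).
  repeat split; auto. eexists g, _. split; [|split; [exact Hg|split; [reflexivity|lra]]].
  intros t Ht. eapply (is_derive_of_agree _ _ (- tV) tV t); [lra| |].
  + intros u Hu. exact (proj1 (HF u Hu)).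
  + exact (proj2 (HF t ltac:(lra))).
Qed.
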